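(* Fix $\alpha\in[0,1]$, assume $\mathcal{N}_M>1$, and let $A_p>0$. Consider the open-loop male-scarcity system on $\mathbb{R}^3_+$: $M'=r\rho Ue^{-\sigma(M+A+U)}-\alpha\frac{A_p}{A_p+A}M-\mu M$, $A'=(1-r)\rho Ue^{-\sigma(M+A+U)}-\nu\frac{\gamma M}{A_p+A}A+\eta U-\delta A$, $U'=\nu\frac{\gamma M}{A_p+A}A-\eta U-\delta U$. (a) If $0<A_p<\tilde A_p^{crit}$, then the basin of attraction of $\mathbf{E}_0=(0,0,0)$ for this system contains $\{\mathbf{X}\in\mathbb{R}^3_+:\ \mathbf{E}_0\le\mathbf{X}<\tilde{\mathbf{E}}_{1,p}\}$. (b) If $A_p>\tilde A_p^{crit}$, then $\mathbf{E}_0$ is globally asymptotically stable on $\mathbb{R}^3_+$ for this system.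
   Context: Parameters: $r\in(0,1)$, $\rho,\sigma,\mu,\delta,\nu,\eta>0$, $\gamma\ge1$; $\mathcal{N}_M:=\frac{\gamma r\rho\nu}{\mu(\delta+\eta)}$. Auxiliary system: $M'=r\rho Ue^{-\sigma M}-\alpha\frac{A_p}{A_p+A}M-\mu M$, $A'=((1-r)\rho+\eta)U-\delta A$, $U'=\nu\frac{\gamma M}{A_p+A}A-(\eta+\delta)U$. $\tilde A_p^{crit}>0$ is the threshold (independent of $A_p$) such that for $A_p>\tilde A_p^{crit}$ the auxiliary system has no positive equilibrium and $\mathbf{E}_0$ is globally asymptotically stable for it on $\mathbb{R}^3_+$, while for $0<A_p<\tilde A_p^{crit}$ the auxiliary system has exactly two positive equilibria $\tilde{\mathbf{E}}_{1,p}<\tilde{\mathbf{E}}_{2,p}$ (componentwise) and the basin of $\mathbf{E}_0$ for the auxiliary system contains $\{\mathbf{E}_0\le\mathbf{X}<\tilde{\mathbf{E}}_{1,p}\}$. Order is componentwise. *)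

From Stdlib Require Import Reals.
From Coquelicot Require Import Coquelicot.
Open Scope R_scope.

(* Points of R^3 written (M, A, U) = ((M, A), U). *)
Definition vec3 : Type := (R * R * R)%type.
Definition c1 (x : vec3) : R := fst (fst x).
Definition c2 (x : vec3) : R := snd (fst x).
Definition c3 (x : vec3) : R := snd x.

Definition E0 : vec3 := (0, 0, 0).

Definition le3 (x y : vec3) : Prop := c1 x <= c1 y /\ c2 x <= c2 y /\ c3 x <= c3 y.
Definition lt3 (x y : vec3) : Prop := c1 x < c1 y /\ c2 x < c2 y /\ c3 x < c3 y.
Definition nonneg3 (x : vec3) : Prop := le3 E0 x.
Definition pos3 (x : vec3) : Prop := lt3 E0 x.

Definition is_solution (f : vec3 -> vec3) (x : R -> vec3) : Prop :=
  (forall t, 0 < t ->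
     is_derive (fun s => c1 (x s)) t (c1 (f (x t))) /\
     is_derive (fun s => c2 (x s)) t (c2 (f (x t))) /\
     is_derive (fun s => c3 (x s)) t (c3 (f (x t)))) /\
  (forall eps, 0 < eps -> exists del, 0 < del /\
     forall t, 0 <= t < del ->
       Rabs (c1 (x t) - c1 (x 0)) < eps /\
       Rabs (c2 (x t) - c2 (x 0)) < eps /\
       Rabs (c3 (x t) - c3 (x 0)) < eps).

Definition converges_to (x : R -> vec3) (e : vec3) : Prop :=
  is_lim (fun t => c1 (x t)) p_infty (c1 e) /\
  is_lim (fun t => c2 (x t)) p_infty (c2 e) /\
  is_lim (fun t => c3 (x t)) p_infty (c3 e).

Definition in_basin (f : vec3 -> vec3) (e x0 : vec3) : Prop :=
  (exists x, is_solution f x /\ x 0 = x0) /\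
  (forall x, is_solution f x -> x 0 = x0 -> converges_to x e).

Definition stable_on_nonneg (f : vec3 -> vec3) (e : vec3) : Prop :=
  forall eps, 0 < eps -> exists del, 0 < del /\
    forall x, is_solution f x -> nonneg3 (x 0) ->
      Rabs (c1 (x 0) - c1 e) < del -> Rabs (c2 (x 0) - c2 e) < del ->
      Rabs (c3 (x 0) - c3 e) < del ->
      forall t, 0 <= t ->
        Rabs (c1 (x t) - c1 e) < eps /\ Rabs (c2 (x t) - c2 e) < eps /\
        Rabs (c3 (x t) - c3 e) < eps.

Definition GAS_on_nonneg (f : vec3 -> vec3) (e : vec3) : Prop :=
  stable_on_nonneg f e /\ forall x0, nonneg3 x0 -> in_basin f e x0.

Definition is_equilibrium (f : vec3 -> vec3) (e : vec3) : Prop := f e = E0.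

Definition main_field (r rho sigma mu delta nu eta gamma alpha Ap : R)
  (X : vec3) : vec3 :=
  let M := c1 X in let A := c2 X in let U := c3 X in
  ( r * rho * U * exp (- sigma * (M + A + U)) - alpha * (Ap / (Ap + A)) * M - mu * M,
    (1 - r) * rho * U * exp (- sigma * (M + A + U)) - nu * (gamma * M / (Ap + A)) * A
      + eta * U - delta * A,
    nu * (gamma * M / (Ap + A)) * A - eta * U - delta * U ).

Definition aux_field (r rho sigma mu delta nu eta gamma alpha Ap : R)
  (X : vec3) : vec3 :=
  let M := c1 X in let A := c2 X in let U := c3 X in
  ( r * rho * U * exp (- sigma * M) - alpha * (Ap / (Ap + A)) * M - mu * M,
    ((1 - r) * rho + eta) * U - delta * A,
    nu * (gamma * M / (Ap + A)) * A - (eta + delta) * U ).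

Definition N_M (r rho mu delta nu eta gamma : R) : R :=
  gamma * r * rho * nu / (mu * (delta + eta)).

From Stdlib Require Import Reals Lra Psatz.
From Coquelicot Require Import Coquelicot.
Open Scope R_scope.

(* Compare the main system with the auxiliary one. Both vector fields are quasi-positive, so
   solutions issued from R^3_+ stay in R^3_+. On R^3_+ the auxiliary field is cooperative and
   dominates the main one: the birth terms of the main system carry the smaller factor
   exp (- sigma (M + A + U)) <= exp (- sigma M), and its A-equation loses the incidence term.
   By the Kamke comparison principle a solution of the main system therefore lies between 0 and
   the solution of the auxiliary system with the same initial value, so attraction to E0 and
   stability of E0 pass from the auxiliary system to the main one. Solutions of the main system
   exist for all times because M + A + U never exceeds
   max (M0 + A0 + U0, rho / (sigma min (mu, delta))), so the Picard solution of the field clipped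
   to a large box already solves the main system. Both invariance properties come from a
   Gronwall argument on squared negative parts. *)

Lemma exp_le_compat x y : x <= y -> exp x <= exp y.
Proof. intros [H|H]; [left; apply exp_increasing; lra|subst; lra]. Qed.

Lemma exp_le_1 x : x <= 0 -> exp x <= 1.
Proof. intros; rewrite <- exp_0; apply exp_le_compat; lra. Qed.

Lemma Rdiv_nonneg_pos x y : 0 <= x -> 0 < y -> 0 <= x / y.
Proof. intros; unfold Rdiv; apply Rmult_le_pos; [lra | left; apply Rinv_0_lt_compat; lra]. Qed.

Lemma Rdiv_nonpos_pos x y : x <= 0 -> 0 < y -> x / y <= 0.
Proof. intros; unfold Rdiv; assert (0 < / y) by (apply Rinv_0_lt_compat; lra); nra. Qed.

Lemma continuity_pt_lipschitz (f : R -> R) (C : R) :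
  (forall s t, Rabs (f t - f s) <= C * Rabs (t - s)) -> forall x, continuity_pt f x.
Proof.
  intros Hf x eps Heps.
  pose proof (Rabs_pos C) as HC.
  exists (eps / (Rabs C + 1)); split.
  { apply Rdiv_lt_0_compat; lra. }
  intros y [_ Hy]; simpl in *; unfold R_dist in *.
  apply Rle_lt_trans with ((Rabs C + 1) * Rabs (y - x)).
  - eapply Rle_trans; [apply Hf|]. pose proof (Rabs_pos (y - x)).
    pose proof (RRle_abs C). nra.
  - apply Rmult_lt_reg_l with (/ (Rabs C + 1)); [apply Rinv_0_lt_compat; lra|].
    rewrite <- Rmult_assoc, Rinv_l by lra. unfold Rdiv in Hy. lra.
Qed.

Lemma MVT_open (f df : R -> R) (a b : R) : a < b ->
  (forall x, a < x < b -> is_derive f x (df x)) ->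
  (forall x, a <= x <= b -> continuity_pt f x) ->
  exists c, a < c < b /\ f b - f a = df c * (b - a).
Proof.
  intros Hab Hd Hc.
  assert (pr1 : forall c, a < c < b -> derivable_pt f c).
  { intros c Hc'. exists (df c). apply is_derive_Reals; auto. }
  assert (pr2 : forall c, a < c < b -> derivable_pt id c) by (intros; apply derivable_pt_id).
  destruct (MVT f id a b pr1 pr2 Hab Hc
              (fun c _ => derivable_continuous_pt _ _ (derivable_pt_id c))) as [c [Hc' Heq]].
  exists c; split; auto.
  rewrite (derive_pt_eq_0 f c (df c) (pr1 c Hc')) in Heq by (apply is_derive_Reals; auto).
  rewrite (derive_pt_eq_0 id c 1 (pr2 c Hc')) in Heq by apply derivable_pt_lim_id.
  unfold id in Heq. lra.
Qed.

Lemma bounded_on_segment (g : R -> R) T : 0 <= T -> (forall t, continuity_pt g t) ->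
  exists B, 0 <= B /\ forall t, 0 <= t <= T -> Rabs (g t) <= B.
Proof.
  intros HT Hc.
  destruct (continuity_ab_maj g 0 T HT (fun c _ => Hc c)) as [p1 [H1 _]].
  destruct (continuity_ab_maj (fun t => - g t) 0 T HT
              (fun c _ => continuity_pt_opp _ _ (Hc c))) as [p2 [H2 _]].
  exists (Rabs (g p1) + Rabs (g p2)); split.
  { pose proof (Rabs_pos (g p1)); pose proof (Rabs_pos (g p2)); lra. }
  intros t Ht. specialize (H1 t Ht); specialize (H2 t Ht).
  pose proof (Rle_abs (g p1)); pose proof (Rle_abs (- g p2)); rewrite Rabs_Ropp in *.
  pose proof (Rabs_pos (g p1)); pose proof (Rabs_pos (g p2)).
  apply Rabs_le; lra.
Qed.

Definition negp (z : R) : R := Rmin z 0.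
Definition negsq (z : R) : R := negp z * negp z.

Lemma negp_le0 z : negp z <= 0.
Proof. unfold negp; apply Rmin_r. Qed.

Lemma negp_neg z : z < 0 -> negp z = z.
Proof. intros; unfold negp; apply Rmin_left; lra. Qed.

Lemma negp_nonneg z : 0 <= z -> negp z = 0.
Proof. intros; unfold negp; apply Rmin_right; lra. Qed.

Lemma negp_le z : negp z <= z.
Proof. unfold negp; apply Rmin_l. Qed.

Lemma negsq_ge0 z : 0 <= negsq z.
Proof. unfold negsq; nra. Qed.

Lemma negsq_eq0 z : negsq z = 0 -> 0 <= z.
Proof.
  intros Hz. destruct (Rlt_le_dec z 0) as [Hn|]; auto.
  unfold negsq in Hz; rewrite negp_neg in Hz by lra; nra.
Qed.

Lemma continuity_pt_negsq (u : R -> R) t :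
  continuity_pt u t -> continuity_pt (fun s => negsq (u s)) t.
Proof.
  intros Hu. unfold negsq.
  assert (Hn : continuity_pt (fun s => negp (u s)) t).
  { apply continuity_pt_comp with (f1 := u) (f2 := negp); auto.
    apply continuity_pt_lipschitz with 1. intros a b. rewrite Rmult_1_l. unfold negp, Rmin.
    destruct (Rle_dec a 0), (Rle_dec b 0); apply Rabs_le; split;
      pose proof (Rle_abs (b - a)); pose proof (Rle_abs (- (b - a))); rewrite Rabs_Ropp in *; lra. }
  apply continuity_pt_mult; auto.
Qed.

Lemma is_derive_negsq z : is_derive negsq z (2 * negp z).
Proof.
  apply is_derive_Reals. intros eps Heps.
  exists (mkposreal eps Heps). intros h Hh Hhe. simpl in Hhe.
  assert (E : Rabs (negsq (z + h) - negsq z - 2 * negp z * h) <= h * h).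
  { unfold negsq, negp. destruct (Rle_dec z 0), (Rle_dec (z + h) 0).
    - rewrite !Rmin_left by lra. rewrite Rabs_right; nra.
    - rewrite (Rmin_left z), (Rmin_right (z + h)) by lra. rewrite Rabs_right; nra.
    - rewrite (Rmin_right z), (Rmin_left (z + h)) by lra. rewrite Rabs_right; nra.
    - rewrite !Rmin_right by lra. rewrite Rabs_right; nra. }
  replace ((negsq (z + h) - negsq z) / h - 2 * negp z)
    with ((negsq (z + h) - negsq z - 2 * negp z * h) / h) by (field; auto).
  unfold Rdiv. rewrite Rabs_mult, Rabs_inv.
  pose proof (Rabs_pos_lt h Hh).
  apply Rle_lt_trans with (h * h * / Rabs h).
  { apply Rmult_le_compat_r; [left; apply Rinv_0_lt_compat|]; auto. }
  replace (h * h) with (Rabs h * Rabs h) by (rewrite <- Rabs_mult; apply Rabs_right; nra).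
  rewrite Rmult_assoc, Rinv_r by lra. lra.
Qed.

Lemma is_derive_negsq_comp (f : R -> R) t l :
  is_derive f t l -> is_derive (fun s => negsq (f s)) t (2 * negp (f t) * l).
Proof.
  intros H.
  replace (2 * negp (f t) * l) with (scal l (2 * negp (f t)))
    by (unfold scal; simpl; unfold mult; simpl; ring).
  apply (is_derive_comp negsq f t); auto. apply is_derive_negsq.
Qed.

(** * A threshold Gronwall lemma *)

Lemma lub_of_zeros_is_zero (V : R -> R) (t1 s0 : R) : 0 <= t1 ->
  (forall t, continuity_pt V t) -> V 0 = 0 ->
  is_lub (fun s => 0 <= s <= t1 /\ V s = 0) s0 -> V s0 = 0.
Proof.
  intros Ht1 HV HV0 [Hub Hlub].
  assert (Hs0 : 0 <= s0) by (apply Hub; split; [lra | auto]).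
  destruct (Req_dec (V s0) 0) as [|Hne]; auto. exfalso.
  destruct (HV s0 (Rabs (V s0)) (Rabs_pos_lt _ Hne)) as [d [Hd Hnear]].
  assert (Hup : is_upper_bound (fun s => 0 <= s <= t1 /\ V s = 0) (Rmax 0 (s0 - d / 2))).
  { intros s [Hs Hzero]. destruct (Rle_dec s (Rmax 0 (s0 - d / 2))) as [|Hgt]; auto. exfalso.
    assert (s <= s0) by (apply Hub; split; auto).
    assert (Hss0 : s0 <> s) by (intros <-; congruence).
    pose proof (Rmax_r 0 (s0 - d / 2)).
    assert (Hdist : R_dist s s0 < d) by (unfold R_dist; rewrite Rabs_left1; lra).
    specialize (Hnear s (conj (conj I Hss0) Hdist)). simpl in Hnear. unfold R_dist in Hnear.
    rewrite Hzero, Rminus_0_l, Rabs_Ropp in Hnear. lra. }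
  specialize (Hlub _ Hup). unfold Rmax in Hlub.
  destruct (Rle_dec 0 (s0 - d / 2)); [lra|].
  replace s0 with 0 in Hne by lra. auto.
Qed.

Lemma zero_propagates (V dV : R -> R) (K s0 s1 : R) :
  0 <= K -> s0 < s1 -> K * (s1 - s0) <= 1 / 2 ->
  (forall t, s0 <= t <= s1 -> continuity_pt V t) ->
  (forall t, s0 < t < s1 -> is_derive V t (dV t)) ->
  (forall t, s0 <= t <= s1 -> 0 <= V t) ->
  (forall t, s0 < t < s1 -> dV t <= K * V t) ->
  V s0 = 0 -> V s1 = 0.
Proof.
  intros HK Hs01 Hsmall Hc Hd Hpos Hgrowth HV0.
  destruct (continuity_ab_maj V s0 s1 ltac:(lra) Hc) as [p [Hmax Hp]].
  assert (HVp : V p = 0).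
  { destruct (Req_dec p s0) as [->|Hps]; auto.
    destruct (MVT_open V dV s0 p ltac:(lra)) as [xi [Hxi Heq]].
    { intros x Hx. apply Hd; lra. }
    { intros x Hx. apply Hc; lra. }
    rewrite HV0, Rminus_0_r in Heq.
    assert (dV xi <= K * V xi) by (apply Hgrowth; lra).
    assert (V xi <= V p) by (apply Hmax; lra).
    assert (0 <= V xi) by (apply Hpos; lra).
    assert (0 <= V p) by (apply Hpos; lra).
    assert (K * (p - s0) <= 1 / 2) by nra.
    assert (dV xi <= K * V p) by nra.
    assert (dV xi * (p - s0) <= K * V p * (p - s0)) by (apply Rmult_le_compat_r; lra).
    nra. }
  assert (V s1 <= V p) by (apply Hmax; lra).
  assert (0 <= V s1) by (apply Hpos; lra). lra.
Qed.

(* The last zero s0 of V in [0, t] cannot lie before t: just after s0, V stays below c, so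
   V' <= K V there and [zero_propagates] pushes the zero further. *)
Lemma threshold_gronwall (V dV : R -> R) (c : R) : 0 < c ->
  (forall t, continuity_pt V t) ->
  (forall t, 0 < t -> is_derive V t (dV t)) ->
  (forall t, 0 <= V t) -> V 0 = 0 ->
  (forall T, 0 < T -> exists K, forall t, 0 < t <= T -> V t < c -> dV t <= K * V t) ->
  forall t, 0 <= t -> V t = 0.
Proof.
  intros Hc Hcont Hder Hpos HV0 Hgrowth t1 Ht1.
  destruct (Req_dec t1 0) as [->|Ht1']; auto.
  destruct (Hgrowth t1 ltac:(lra)) as [K0 HK0].
  set (K := Rmax K0 0).
  assert (HK : 0 <= K) by apply Rmax_r.
  destruct (Req_dec (V t1) 0) as [|HVt1]; auto. exfalso.
  set (Z := fun s => 0 <= s <= t1 /\ V s = 0).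
  destruct (completeness Z) as [s0 Hs0].
  { exists t1. intros s [Hs _]. lra. }
  { exists 0. split; auto; lra. }
  assert (HVs0 : V s0 = 0) by (apply (lub_of_zeros_is_zero V t1); auto; lra).
  destruct Hs0 as [Hub Hlub].
  assert (Hrange : 0 <= s0 <= t1).
  { split; [apply Hub; split; auto; lra | apply Hlub; intros s [Hs _]; lra]. }
  assert (Hlt : s0 < t1) by (destruct Hrange as [_ [|Heq]]; [auto | subst; congruence]).
  destruct (Hcont s0 c Hc) as [d [Hd Hnear]].
  set (h := Rmin (d / 2) (1 / (2 * K + 2))).
  assert (Hh : 0 < h) by (apply Rmin_glb_lt; [lra | apply Rdiv_lt_0_compat; lra]).
  set (s1 := Rmin t1 (s0 + h)).
  assert (Hs1 : s0 < s1 <= t1) by (split; [apply Rmin_glb_lt; lra | apply Rmin_l]).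
  assert (Hs1h : s1 - s0 <= h) by (pose proof (Rmin_r t1 (s0 + h)); unfold s1; lra).
  assert (Hbelow : forall s, s0 < s < s1 -> V s < c).
  { intros s Hs.
    assert (Hdist : R_dist s s0 < d).
    { assert (h <= d / 2) by apply Rmin_l. unfold R_dist. rewrite Rabs_right; lra. }
    specialize (Hnear s (conj (conj I (Rlt_not_eq _ _ (proj1 Hs))) Hdist)).
    simpl in Hnear; unfold R_dist in Hnear. rewrite HVs0, Rminus_0_r in Hnear.
    pose proof (Rle_abs (V s)). lra. }
  assert (HVs1 : V s1 = 0).
  { apply (zero_propagates V dV K s0 s1); auto; try lra.
    - assert (K * h <= K * (1 / (2 * K + 2))) by (apply Rmult_le_compat_l; [lra | apply Rmin_r]).
      assert (K * (1 / (2 * K + 2)) <= 1 / 2)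
        by (apply Rmult_le_reg_r with (2 * K + 2); [lra|];
            replace (K * (1 / (2 * K + 2)) * (2 * K + 2)) with K by (field; lra); lra).
      nra.
    - intros s Hs. apply Hder; lra.
    - intros s Hs. eapply Rle_trans; [apply HK0; [lra | apply Hbelow; lra] |].
      apply Rmult_le_compat_r; [apply Hpos | apply Rmax_l]. }
  assert (s1 <= s0) by (apply Hub; split; auto; lra). lra.
Qed.

Lemma negp_mul_rate_le (m1 m2 m3 m d k : R) :
  m1 <= 0 -> m2 <= 0 -> m3 <= 0 -> 0 <= k -> (m = m1 \/ m = m2 \/ m = m3) ->
  (m < 0 -> d >= k * (m1 + m2 + m3)) ->
  2 * m * d <= 4 * k * (m1 * m1 + m2 * m2 + m3 * m3).
Proof.
  intros H1 H2 H3 Hk Hm Hd.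
  destruct (Req_dec m 0) as [->|Hne].
  { rewrite Rmult_0_r, Rmult_0_l. apply Rmult_le_pos; nra. }
  assert (Hneg : m < 0) by (destruct Hm as [-> | [-> | ->]]; lra).
  specialize (Hd Hneg).
  assert (2 * m * d <= k * (2 * m * (m1 + m2 + m3))) by nra.
  assert (2 * m * (m1 + m2 + m3) <= 4 * (m1 * m1 + m2 * m2 + m3 * m3))
    by (pose proof (Rle_0_sqr (m1 - m2)); pose proof (Rle_0_sqr (m1 - m3));
        pose proof (Rle_0_sqr (m2 - m3)); unfold Rsqr in *; destruct Hm as [-> | [-> | ->]]; nra).
  nra.
Qed.

(* Quasi-positivity: a component can only be pushed further below 0 at a rate controlled by the
   total negative part. Then the squared negative part V satisfies V' <= 12 k V. *)
Lemma orthant_invariance (u1 u2 u3 d1 d2 d3 : R -> R) (c : R) : 0 < c ->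
  (forall t, continuity_pt u1 t) -> (forall t, continuity_pt u2 t) ->
  (forall t, continuity_pt u3 t) ->
  (forall t, 0 < t -> is_derive u1 t (d1 t)) ->
  (forall t, 0 < t -> is_derive u2 t (d2 t)) ->
  (forall t, 0 < t -> is_derive u3 t (d3 t)) ->
  0 <= u1 0 -> 0 <= u2 0 -> 0 <= u3 0 ->
  (forall T, 0 < T -> exists k, 0 <= k /\ forall t, 0 < t <= T ->
      negsq (u1 t) + negsq (u2 t) + negsq (u3 t) < c ->
      let s := negp (u1 t) + negp (u2 t) + negp (u3 t) in
      (u1 t < 0 -> d1 t >= k * s) /\ (u2 t < 0 -> d2 t >= k * s) /\
      (u3 t < 0 -> d3 t >= k * s)) ->
  forall t, 0 <= t -> 0 <= u1 t /\ 0 <= u2 t /\ 0 <= u3 t.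
Proof.
  intros Hc C1 C2 C3 D1 D2 D3 P1 P2 P3 Hqp.
  set (V := fun t => negsq (u1 t) + negsq (u2 t) + negsq (u3 t)).
  assert (HV : forall t, 0 <= t -> V t = 0).
  { apply (threshold_gronwall V
      (fun t => 2 * negp (u1 t) * d1 t + 2 * negp (u2 t) * d2 t + 2 * negp (u3 t) * d3 t) c Hc).
    - intros t. unfold V.
      repeat apply continuity_pt_plus; apply continuity_pt_negsq; auto.
    - intros t Ht. unfold V.
      repeat apply (is_derive_plus (K := R_AbsRing) (V := R_NormedModule));
        apply is_derive_negsq_comp; auto.
    - intros t. unfold V.
      pose proof (negsq_ge0 (u1 t)); pose proof (negsq_ge0 (u2 t));
        pose proof (negsq_ge0 (u3 t)); lra.
    - unfold V, negsq. rewrite !negp_nonneg by auto. ring.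
    - intros T HT. destruct (Hqp T HT) as [k [Hk Hkt]]. exists (12 * k).
      intros t Ht Hsmall. destruct (Hkt t Ht Hsmall) as [E1 [E2 E3]].
      assert (Hneg : forall z, negp z < 0 -> z < 0)
        by (intros z Hz; destruct (Rlt_le_dec z 0); auto; rewrite negp_nonneg in Hz; lra).
      pose proof (negp_le0 (u1 t)) as H; pose proof (negp_le0 (u2 t)) as H0;
        pose proof (negp_le0 (u3 t)) as H1.
      unfold V, negsq.
      set (m1 := negp (u1 t)) in *; set (m2 := negp (u2 t)) in *; set (m3 := negp (u3 t)) in *.
      assert (F1 := negp_mul_rate_le m1 m2 m3 m1 (d1 t) k H H0 H1 Hk
                      ltac:(auto) (fun Hm => E1 (Hneg _ Hm))).
      assert (F2 := negp_mul_rate_le m1 m2 m3 m2 (d2 t) k H H0 H1 Hk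
                      ltac:(auto) (fun Hm => E2 (Hneg _ Hm))).
      assert (F3 := negp_mul_rate_le m1 m2 m3 m3 (d3 t) k H H0 H1 Hk
                      ltac:(auto) (fun Hm => E3 (Hneg _ Hm))).
      lra. }
  intros t Ht. specialize (HV t Ht). unfold V in HV.
  pose proof (negsq_ge0 (u1 t)); pose proof (negsq_ge0 (u2 t)); pose proof (negsq_ge0 (u3 t)).
  repeat split; apply negsq_eq0; lra.
Qed.

Lemma upper_bound_invariance (w dw : R -> R) (S : R) :
  (forall t, continuity_pt w t) -> (forall t, 0 < t -> is_derive w t (dw t)) ->
  w 0 <= S -> (forall t, 0 < t -> S < w t -> dw t <= 0) ->
  forall t, 0 <= t -> w t <= S.
Proof.
  intros Hc Hd H0 Hdecr.
  set (V := fun t => negsq (S - w t)).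
  assert (HV : forall t, 0 <= t -> V t = 0).
  { apply (threshold_gronwall V (fun t => 2 * negp (S - w t) * - dw t) 1 Rlt_0_1).
    - intros t. unfold V. apply continuity_pt_negsq with (u := fun s => S - w s).
      apply continuity_pt_minus; auto.
      apply continuity_pt_const; intros ? ?; auto.
    - intros t Ht. unfold V. apply is_derive_negsq_comp with (f := fun s => S - w s).
      pose proof (is_derive_minus (K := R_AbsRing) (V := R_NormedModule) (fun _ => S) w t
                    zero (dw t) (is_derive_const (K := R_AbsRing) (V := R_NormedModule) S t)
                    (Hd t Ht)) as Hm.
      unfold minus, plus, opp, zero in Hm; simpl in Hm. rewrite Rplus_0_l in Hm. exact Hm.
    - intros t; apply negsq_ge0.
    - unfold V, negsq. rewrite negp_nonneg by lra. ring.
    - intros T HT. exists 0. intros t Ht _. rewrite Rmult_0_l.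
      destruct (Rlt_le_dec (S - w t) 0).
      + rewrite negp_neg by auto. assert (dw t <= 0) by (apply Hdecr; lra). nra.
      + rewrite negp_nonneg by auto. lra. }
  intros t Ht. pose proof (negsq_eq0 _ (HV t Ht)). lra.
Qed.

(* [is_solution] only constrains t >= 0; freezing the solution before 0 makes its components
   continuous on all of R. *)
Definition extend_past (x : R -> vec3) (t : R) : vec3 := x (Rmax t 0).

Lemma extend_past_eq x t : 0 <= t -> extend_past x t = x t.
Proof. intros; unfold extend_past; rewrite Rmax_left; auto. Qed.

Lemma is_derive_extend_past (g dg : R -> R) t : 0 < t -> is_derive g t (dg t) ->
  is_derive (fun s => g (Rmax s 0)) t (dg t).
Proof.
  intros Ht H. apply is_derive_ext_loc with g; auto.
  exists (mkposreal t Ht). intros y Hy. simpl.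
  unfold ball in Hy; simpl in Hy; unfold AbsRing_ball, abs, minus, plus, opp in Hy; simpl in Hy.
  apply Rabs_def2 in Hy. rewrite Rmax_left; auto; lra.
Qed.

Lemma continuity_pt_extend_past (g dg : R -> R) :
  (forall t, 0 < t -> is_derive g t (dg t)) ->
  (forall eps, 0 < eps -> exists del, 0 < del /\
     forall t, 0 <= t < del -> Rabs (g t - g 0) < eps) ->
  forall t, continuity_pt (fun s => g (Rmax s 0)) t.
Proof.
  intros Hd Hr t.
  destruct (Rlt_le_dec 0 t) as [Ht|Ht].
  - apply continuity_pt_filterlim.
    assert (Hc : continuous (fun s => g (Rmax s 0)) t).
    { apply (ex_derive_continuous (K := R_AbsRing) (V := R_NormedModule)).
      exists (dg t). apply is_derive_extend_past; auto. }
    exact Hc.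
  - intros eps Heps.
    assert (Hflat : forall y, y <= 0 -> g (Rmax y 0) = g 0) by (intros; rewrite Rmax_right; auto).
    destruct (Rle_lt_or_eq_dec t 0 Ht) as [Hlt | ->].
    + exists (- t). split; [lra|]. intros y [_ Hy]; simpl in *; unfold R_dist in *.
      apply Rabs_def2 in Hy. rewrite !Hflat by lra. rewrite Rminus_eq_0, Rabs_R0; auto.
    + destruct (Hr eps Heps) as [d [Hd0 Hdd]].
      exists d. split; auto. intros y [_ Hy]; simpl in *; unfold R_dist in *.
      rewrite Rminus_0_r in Hy. rewrite (Hflat 0) by lra.
      destruct (Rle_dec y 0).
      * rewrite Hflat by auto. rewrite Rminus_eq_0, Rabs_R0; auto.
      * rewrite Rmax_left by lra. apply Hdd. apply Rabs_def2 in Hy. lra.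
Qed.

Section Solution.
Variables (F : vec3 -> vec3) (x : R -> vec3).
Hypothesis Hx : is_solution F x.

Let u1 t := c1 (extend_past x t).
Let u2 t := c2 (extend_past x t).
Let u3 t := c3 (extend_past x t).

Lemma solution_continuous :
  (forall t, continuity_pt u1 t) /\ (forall t, continuity_pt u2 t) /\
  (forall t, continuity_pt u3 t).
Proof.
  destruct Hx as [Hd Hr]. unfold u1, u2, u3, extend_past.
  split; [|split];
    [ apply (continuity_pt_extend_past (fun s => c1 (x s)) (fun s => c1 (F (x s))))
    | apply (continuity_pt_extend_past (fun s => c2 (x s)) (fun s => c2 (F (x s))))
    | apply (continuity_pt_extend_past (fun s => c3 (x s)) (fun s => c3 (F (x s)))) ];
    try (intros t Ht; apply Hd; auto);
    intros eps Heps; destruct (Hr eps Heps) as [d [Hd0 Hdd]];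
    exists d; split; auto; intros t Ht; apply Hdd; auto.
Qed.

Lemma solution_derive :
  (forall t, 0 < t -> is_derive u1 t (c1 (F (x t)))) /\
  (forall t, 0 < t -> is_derive u2 t (c2 (F (x t)))) /\
  (forall t, 0 < t -> is_derive u3 t (c3 (F (x t)))).
Proof.
  destruct Hx as [Hd _]. unfold u1, u2, u3, extend_past.
  split; [|split]; intros t Ht;
    [ apply (is_derive_extend_past (fun s => c1 (x s)) (fun s => c1 (F (x s))))
    | apply (is_derive_extend_past (fun s => c2 (x s)) (fun s => c2 (F (x s))))
    | apply (is_derive_extend_past (fun s => c3 (x s)) (fun s => c3 (F (x s)))) ];
    auto; apply Hd; auto.
Qed.

Lemma solution_bounded T : 0 <= T -> exists B, 0 <= B /\ forall t, 0 <= t <= T ->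
  Rabs (c1 (x t)) <= B /\ Rabs (c2 (x t)) <= B /\ Rabs (c3 (x t)) <= B.
Proof.
  intros HT. destruct solution_continuous as [C1 [C2 C3]].
  destruct (bounded_on_segment _ T HT C1) as [B1 [P1 Q1]].
  destruct (bounded_on_segment _ T HT C2) as [B2 [P2 Q2]].
  destruct (bounded_on_segment _ T HT C3) as [B3 [P3 Q3]].
  exists (B1 + B2 + B3). split; [lra|]. intros t Ht.
  specialize (Q1 t Ht); specialize (Q2 t Ht); specialize (Q3 t Ht).
  unfold u1, u2, u3 in *. rewrite extend_past_eq in * by lra. lra.
Qed.

End Solution.

(** * Positivity and comparison of solutions *)

Definition quasi_positive (F : vec3 -> vec3) : Prop :=
  exists c, 0 < c /\ forall B, 0 <= B -> exists k, 0 <= k /\ forall X,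
    Rabs (c1 X) <= B -> Rabs (c2 X) <= B -> Rabs (c3 X) <= B ->
    negsq (c1 X) + negsq (c2 X) + negsq (c3 X) < c ->
    let s := negp (c1 X) + negp (c2 X) + negp (c3 X) in
    (c1 X < 0 -> c1 (F X) >= k * s) /\ (c2 X < 0 -> c2 (F X) >= k * s) /\
    (c3 X < 0 -> c3 (F X) >= k * s).

Definition quasi_monotone_dominated (F G : vec3 -> vec3) : Prop :=
  forall B, 0 <= B -> exists k, 0 <= k /\ forall X Y,
    nonneg3 X -> nonneg3 Y -> le3 X (B, B, B) -> le3 Y (B, B, B) ->
    let s := negp (c1 Y - c1 X) + negp (c2 Y - c2 X) + negp (c3 Y - c3 X) in
    (c1 Y - c1 X < 0 -> c1 (G Y) - c1 (F X) >= k * s) /\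
    (c2 Y - c2 X < 0 -> c2 (G Y) - c2 (F X) >= k * s) /\
    (c3 Y - c3 X < 0 -> c3 (G Y) - c3 (F X) >= k * s).

Lemma solution_nonneg F x : quasi_positive F -> is_solution F x -> nonneg3 (x 0) ->
  forall t, 0 <= t -> nonneg3 (x t).
Proof.
  intros [c [Hc HF]] Hx [P1 [P2 P3]].
  destruct (solution_continuous F x Hx) as [C1 [C2 C3]].
  destruct (solution_derive F x Hx) as [D1 [D2 D3]].
  intros t Ht. rewrite <- (extend_past_eq x t Ht).
  apply (orthant_invariance _ _ _ _ _ _ c Hc C1 C2 C3 D1 D2 D3); auto;
    try (rewrite extend_past_eq; auto; lra).
  intros T HT. destruct (solution_bounded F x Hx T ltac:(lra)) as [B [HB HBt]].
  destruct (HF B HB) as [k [Hk Hkt]]. exists k. split; auto.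
  intros s Hs. rewrite extend_past_eq by lra.
  destruct (HBt s ltac:(lra)) as [B1 [B2 B3]]. apply Hkt; auto.
Qed.

Lemma solution_comparison F G x y : quasi_monotone_dominated F G ->
  is_solution F x -> is_solution G y ->
  (forall t, 0 <= t -> nonneg3 (x t)) -> (forall t, 0 <= t -> nonneg3 (y t)) ->
  le3 (x 0) (y 0) -> forall t, 0 <= t -> le3 (x t) (y t).
Proof.
  intros HFG Hx Hy Nx Ny [L1 [L2 L3]].
  destruct (solution_continuous F x Hx) as [C1 [C2 C3]].
  destruct (solution_derive F x Hx) as [D1 [D2 D3]].
  destruct (solution_continuous G y Hy) as [C1' [C2' C3']].
  destruct (solution_derive G y Hy) as [D1' [D2' D3']].
  assert (Hd : forall (f g : R -> R) s df dg, is_derive f s df -> is_derive g s dg ->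
             is_derive (fun t => g t - f t) s (dg - df))
    by (intros; apply (is_derive_minus (K := R_AbsRing) (V := R_NormedModule)); auto).
  intros t Ht. rewrite <- (extend_past_eq x t Ht), <- (extend_past_eq y t Ht).
  cut (0 <= c1 (extend_past y t) - c1 (extend_past x t) /\
       0 <= c2 (extend_past y t) - c2 (extend_past x t) /\
       0 <= c3 (extend_past y t) - c3 (extend_past x t)).
  { unfold le3; lra. }
  apply (orthant_invariance (fun t => c1 (extend_past y t) - c1 (extend_past x t))
           (fun t => c2 (extend_past y t) - c2 (extend_past x t))
           (fun t => c3 (extend_past y t) - c3 (extend_past x t))
           (fun t => c1 (G (y t)) - c1 (F (x t)))
           (fun t => c2 (G (y t)) - c2 (F (x t))) (fun t => c3 (G (y t)) - c3 (F (x t)))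
           1 Rlt_0_1);
    auto; try (intros; apply continuity_pt_minus; auto);
    try (rewrite !extend_past_eq by lra; lra).
  intros T HT.
  destruct (solution_bounded F x Hx T ltac:(lra)) as [Bx [HBx HBxt]].
  destruct (solution_bounded G y Hy T ltac:(lra)) as [By [HBy HByt]].
  destruct (HFG (Bx + By) ltac:(lra)) as [k [Hk Hkt]]. exists k. split; auto.
  intros s Hs _. rewrite !extend_past_eq by lra.
  destruct (HBxt s ltac:(lra)) as [B1 [B2 B3]]. destruct (HByt s ltac:(lra)) as [B1' [B2' B3']].
  pose proof (Nx s ltac:(lra)) as Nxs. pose proof (Ny s ltac:(lra)) as Nys.
  destruct Nxs as [P1 [P2 P3]]; destruct Nys as [P1' [P2' P3']].
  apply Rabs_le_between in B1, B2, B3, B1', B2', B3'.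
  apply Hkt; unfold nonneg3, le3, c1, c2, c3 in *; simpl in *; repeat split; lra.
Qed.

Definition dominated_solutions (F G : vec3 -> vec3) : Prop :=
  forall x y, is_solution F x -> is_solution G y -> nonneg3 (x 0) -> y 0 = x 0 ->
    forall t, 0 <= t -> nonneg3 (x t) /\ le3 (x t) (y t).

Lemma dominated_solutions_of_quasi_monotone F G :
  quasi_positive F -> quasi_positive G -> quasi_monotone_dominated F G ->
  dominated_solutions F G.
Proof.
  intros HF HG HFG x y Hx Hy H0 Hyx t Ht.
  pose proof (solution_nonneg F x HF Hx H0) as Nx.
  assert (Ny := solution_nonneg G y HG Hy ltac:(rewrite Hyx; auto)).
  split; auto. apply (solution_comparison F G x y); auto.
  rewrite Hyx. repeat split; lra.
Qed.

Lemma converges_to_E0_squeeze (x y : R -> vec3) :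
  (forall t, 0 <= t -> nonneg3 (x t) /\ le3 (x t) (y t)) ->
  converges_to y E0 -> converges_to x E0.
Proof.
  intros H [L1 [L2 L3]].
  assert (Hsq : forall (u v : R -> R), (forall t, 0 <= t -> 0 <= u t <= v t) ->
             is_lim v p_infty 0 -> is_lim u p_infty 0).
  { intros u v Huv Hv. apply (is_lim_le_le_loc (fun _ => 0) v); auto.
    - exists 0. intros t Ht. apply Huv. lra.
    - apply (is_lim_const 0). }
  split; [|split]; [eapply Hsq, L1 | eapply Hsq, L2 | eapply Hsq, L3];
    intros t Ht; destruct (H t Ht) as [[P1 [P2 P3]] [Q1 [Q2 Q3]]];
    unfold c1, c2, c3 in *; simpl in *; lra.
Qed.

Lemma in_basin_of_dominated F G X0 : dominated_solutions F G ->
  (exists x, is_solution F x /\ x 0 = X0) -> nonneg3 X0 ->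
  in_basin G E0 X0 -> in_basin F E0 X0.
Proof.
  intros Hdom Hex HX0 [[y [Hy Hy0]] Hconv]. split; auto.
  intros x Hx Hx0. apply (converges_to_E0_squeeze x y).
  - apply Hdom; auto; congruence.
  - apply Hconv; auto.
Qed.

Lemma stable_of_dominated F G : dominated_solutions F G ->
  (forall X0, nonneg3 X0 -> exists y, is_solution G y /\ y 0 = X0) ->
  stable_on_nonneg G E0 -> stable_on_nonneg F E0.
Proof.
  intros Hdom Hex Hst eps Heps. destruct (Hst eps Heps) as [del [Hdel Hd]].
  exists del. split; auto. intros x Hx H0 B1 B2 B3 t Ht.
  destruct (Hex (x 0) H0) as [y [Hy Hy0]].
  rewrite <- Hy0 in B1, B2, B3.
  destruct (Hd y Hy ltac:(rewrite Hy0; auto) B1 B2 B3 t Ht) as [Q1 [Q2 Q3]].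
  destruct (Hdom x y Hx Hy H0 Hy0 t Ht) as [[P1 [P2 P3]] [L1 [L2 L3]]].
  unfold c1, c2, c3 in *; simpl in *. rewrite !Rminus_0_r in *.
  apply Rabs_lt_between in Q1, Q2, Q3. repeat split; apply Rabs_lt_between; lra.
Qed.

(** * Existence for globally Lipschitz fields *)

Lemma ex_RInt_continuous_everywhere (f : R -> R) a b :
  (forall t, continuity_pt f t) -> ex_RInt f a b.
Proof.
  intros H. apply (ex_RInt_continuous (V := R_CompleteNormedModule)). intros z _.
  apply continuity_pt_filterlim, H.
Qed.

Lemma continuity_pt_exp_scal a t : continuity_pt (fun s => exp (a * s)) t.
Proof.
  apply (continuity_pt_comp (fun s => a * s) exp).
  - apply continuity_pt_mult; [apply continuity_pt_const; intros ? ?; auto|].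
    apply continuity_pt_id.
  - apply derivable_continuous_pt, derivable_pt_exp.
Qed.

Lemma RInt_lipschitz (f : R -> R) K s t : (forall t, continuity_pt f t) ->
  (forall t, Rabs (f t) <= K) -> Rabs (RInt f 0 t - RInt f 0 s) <= K * Rabs (t - s).
Proof.
  intros Hc HK.
  assert (Hint := ex_RInt_continuous_everywhere f).
  assert (Hch : RInt f 0 s + RInt f s t = RInt f 0 t)
    by (apply (RInt_Chasles (V := R_CompleteNormedModule)); auto).
  replace (RInt f 0 t - RInt f 0 s) with (RInt f s t) by lra.
  destruct (Rle_dec s t).
  - rewrite (Rabs_right (t - s)), Rmult_comm by lra. apply abs_RInt_le_const; auto.
  - rewrite <- (opp_RInt_swap (V := R_CompleteNormedModule)) by auto.
    unfold opp; simpl. rewrite Rabs_Ropp, (Rabs_left (t - s)), Rmult_comm by lra.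
    replace (- (t - s)) with (s - t) by ring. apply abs_RInt_le_const; auto; lra.
Qed.

Lemma RInt_Rminus (f g : R -> R) a b :
  (forall t, continuity_pt f t) -> (forall t, continuity_pt g t) ->
  RInt (fun s => f s - g s) a b = RInt f a b - RInt g a b.
Proof. intros; apply (RInt_minus f g a b); apply ex_RInt_continuous_everywhere; auto. Qed.

Lemma abs_RInt_le_fun (f h : R -> R) a b : a <= b ->
  (forall t, continuity_pt f t) -> (forall t, continuity_pt h t) ->
  (forall x, a < x < b -> Rabs (f x) <= h x) -> Rabs (RInt f a b) <= RInt h a b.
Proof.
  intros Hab Hf Hh Hb.
  assert (Hint := ex_RInt_continuous_everywhere).
  apply Rabs_le. split.
  - rewrite <- (RInt_opp (V := R_CompleteNormedModule)) by auto.
    apply RInt_le; auto.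
    { apply Hint. intros t; apply continuity_pt_opp; auto. }
    intros x Hx. specialize (Hb x Hx). apply Rabs_le_between in Hb. unfold opp; simpl; lra.
  - apply RInt_le; auto. intros x Hx. specialize (Hb x Hx). apply Rabs_le_between in Hb. lra.
Qed.

Lemma RInt_exp_scal a t : 0 < a -> RInt (fun s => exp (a * s)) 0 t = (exp (a * t) - 1) / a.
Proof.
  intros Ha. apply is_RInt_unique.
  replace ((exp (a * t) - 1) / a) with (minus (exp (a * t) / a) (exp (a * 0) / a)).
  2:{ rewrite Rmult_0_r, exp_0. unfold minus, plus, opp; simpl. field. lra. }
  apply (is_RInt_derive (fun s => exp (a * s) / a)).
  - intros x _. auto_derive; auto. field. lra.
  - intros x _. apply continuity_pt_filterlim, continuity_pt_exp_scal.
Qed.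

Lemma le_of_le_geometric (x y C : R) : (forall n : nat, x <= y + C * (1 / 2) ^ n) -> x <= y.
Proof.
  intros H. destruct (Rle_dec x y) as [|Hn]; auto. exfalso.
  set (C' := Rabs C + 1).
  assert (HC' : 0 < C') by (pose proof (Rabs_pos C); unfold C'; lra).
  assert (Hd : 0 < (x - y) / C') by (apply Rdiv_lt_0_compat; lra).
  destruct (pow_lt_1_zero (1 / 2) ltac:(rewrite Rabs_right; lra) _ Hd) as [N HN].
  specialize (HN N (le_n N)). specialize (H N).
  rewrite Rabs_right in HN by (apply Rle_ge, pow_le; lra).
  assert (0 <= (1 / 2) ^ N) by (apply pow_le; lra).
  assert (C * (1 / 2) ^ N <= C' * (1 / 2) ^ N)
    by (apply Rmult_le_compat_r; auto; pose proof (RRle_abs C); unfold C'; lra).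
  assert (C' * (1 / 2) ^ N < x - y).
  { apply Rmult_lt_reg_l with (/ C'); [apply Rinv_0_lt_compat; lra|].
    rewrite <- Rmult_assoc, Rinv_l, Rmult_1_l by lra. unfold Rdiv in Hd. lra. }
  lra.
Qed.

Lemma is_lim_seq_abs_le (u : nat -> R) (l v b : R) n : is_lim_seq u l ->
  (forall m, (n <= m)%nat -> Rabs (u m - v) <= b) -> Rabs (l - v) <= b.
Proof.
  intros Hl Hb. destruct (Rle_dec (Rabs (l - v)) b) as [|Hn]; auto. exfalso.
  apply is_lim_seq_spec in Hl.
  assert (He : 0 < Rabs (l - v) - b) by lra.
  destruct (Hl (mkposreal _ He)) as [N HN]. simpl in HN.
  specialize (HN (max N n) ltac:(lia)). specialize (Hb (max N n) ltac:(lia)).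
  pose proof (Rabs_triang (u (max N n) - v) (l - u (max N n))) as Htri.
  replace (u (max N n) - v + (l - u (max N n))) with (l - v) in Htri by ring.
  rewrite Rabs_minus_sym in HN. lra.
Qed.

Definition comp (i : nat) (v : vec3) : R :=
  match i with O => c1 v | 1%nat => c2 v | _ => c3 v end.

Definition dist1 (a b : vec3) : R :=
  Rabs (c1 a - c1 b) + Rabs (c2 a - c2 b) + Rabs (c3 a - c3 b).

Lemma dist1_ge0 a b : 0 <= dist1 a b.
Proof.
  unfold dist1. pose proof (Rabs_pos (c1 a - c1 b)); pose proof (Rabs_pos (c2 a - c2 b)).
  pose proof (Rabs_pos (c3 a - c3 b)). lra.
Qed.

Lemma comp_le_dist1 i a b : Rabs (comp i a - comp i b) <= dist1 a b.
Proof.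
  unfold dist1. pose proof (Rabs_pos (c1 a - c1 b)); pose proof (Rabs_pos (c2 a - c2 b)).
  pose proof (Rabs_pos (c3 a - c3 b)). destruct i as [|[|]]; simpl; lra.
Qed.

Lemma dist1_comp a b :
  dist1 a b = Rabs (comp 0 a - comp 0 b) + Rabs (comp 1 a - comp 1 b) + Rabs (comp 2 a - comp 2 b).
Proof. reflexivity. Qed.

Section Picard.
Variable F : vec3 -> vec3.
Variables L K : R.
Hypothesis HL0 : 0 < L.
Hypothesis HK0 : 0 <= K.
Hypothesis HL : forall i a b, Rabs (comp i (F a) - comp i (F b)) <= L * dist1 a b.
Hypothesis HK : forall i a, Rabs (comp i (F a)) <= K.
Variable X0 : vec3.

Fixpoint picard (n : nat) : R -> vec3 :=
  match n with
  | O => fun _ => X0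
  | S n => fun t => (c1 X0 + RInt (fun s => c1 (F (picard n s))) 0 t,
                     c2 X0 + RInt (fun s => c2 (F (picard n s))) 0 t,
                     c3 X0 + RInt (fun s => c3 (F (picard n s))) 0 t)
  end.

Lemma picard_S i n t :
  comp i (picard (S n) t) = comp i X0 + RInt (fun s => comp i (F (picard n s))) 0 t.
Proof. destruct i as [|[|]]; reflexivity. Qed.

Lemma continuity_pt_field_comp (g : R -> vec3) C :
  (forall i s t, Rabs (comp i (g t) - comp i (g s)) <= C * Rabs (t - s)) ->
  forall i t, continuity_pt (fun s => comp i (F (g s))) t.
Proof.
  intros Hg i. apply continuity_pt_lipschitz with (L * (3 * C)). intros s t.
  eapply Rle_trans; [apply HL|]. rewrite dist1_comp.
  pose proof (Rabs_pos (t - s)).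
  pose proof (Hg 0%nat s t); pose proof (Hg 1%nat s t); pose proof (Hg 2%nat s t). nra.
Qed.

Lemma picard_lipschitz n :
  forall i s t, Rabs (comp i (picard n t) - comp i (picard n s)) <= K * Rabs (t - s).
Proof.
  induction n; intros i s t.
  - simpl. rewrite Rminus_eq_0, Rabs_R0. apply Rmult_le_pos; auto; apply Rabs_pos.
  - rewrite !picard_S.
    match goal with |- Rabs (?c + ?I - (?c + ?J)) <= _ =>
      replace (c + I - (c + J)) with (I - J) by ring end.
    apply RInt_lipschitz; [apply (continuity_pt_field_comp _ K IHn) | intros; apply HK].
Qed.

Lemma continuity_pt_picard n i t : continuity_pt (fun s => comp i (F (picard n s))) t.
Proof. apply (continuity_pt_field_comp _ K (picard_lipschitz n)). Qed.

(* With the weight exp (a t), a = 6 L, successive Picard iterates contract by 1/2. *)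
Let a := 6 * L.
Let C0 := 3 * K / a.

Lemma picard_rate_pos : 0 < a.
Proof. unfold a; lra. Qed.

Lemma picard_const_ge0 : 0 <= C0.
Proof. apply Rdiv_nonneg_pos; [lra | apply picard_rate_pos]. Qed.

Lemma picard_step_first t : 0 <= t -> dist1 (picard 1 t) (picard 0 t) <= C0 * exp (a * t).
Proof.
  intros Ht. pose proof picard_rate_pos.
  rewrite dist1_comp.
  assert (Hb : forall i, Rabs (comp i (picard 1 t) - comp i (picard 0 t)) <= K * t).
  { intros i. rewrite picard_S. simpl (picard 0).
    cbv beta. match goal with |- Rabs (?c + ?I - ?c) <= _ => replace (c + I - c) with I by lra end.
    rewrite Rmult_comm. replace t with (t - 0) at 2 by ring.
    apply abs_RInt_le_const; [lra | | intros; apply HK].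
    apply ex_RInt_continuous_everywhere. intros; apply continuity_pt_const; intros ? ?; auto. }
  pose proof (Hb 0%nat); pose proof (Hb 1%nat); pose proof (Hb 2%nat).
  assert (a * t <= exp (a * t)) by (pose proof (exp_ineq1_le (a * t)); lra).
  assert (3 * K * t <= C0 * exp (a * t)).
  { unfold C0. replace (3 * K / a * exp (a * t)) with (3 * K * (exp (a * t) / a)) by (field; lra).
    apply Rmult_le_compat_l; [lra|]. apply Rmult_le_reg_r with a; auto.
    unfold Rdiv. rewrite Rmult_assoc, Rinv_l; lra. }
  lra.
Qed.

Lemma picard_step n : forall t, 0 <= t ->
  dist1 (picard (S n) t) (picard n t) <= C0 * (1 / 2) ^ n * exp (a * t).
Proof.
  pose proof picard_rate_pos as Ha. pose proof picard_const_ge0 as HC.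
  induction n; intros t Ht.
  { rewrite pow_O, Rmult_1_r. apply picard_step_first; auto. }
  rewrite dist1_comp.
  set (w := L * C0 * (1 / 2) ^ n).
  assert (Hw : 0 <= w) by (apply Rmult_le_pos; [nra | apply pow_le; lra]).
  assert (Hb : forall i, Rabs (comp i (picard (S (S n)) t) - comp i (picard (S n) t))
                          <= w * (exp (a * t) / a)).
  { intros i. rewrite !picard_S.
    replace (comp i X0 + RInt (fun s => comp i (F (picard (S n) s))) 0 t
             - (comp i X0 + RInt (fun s => comp i (F (picard n s))) 0 t))
      with (RInt (fun s => comp i (F (picard (S n) s)) - comp i (F (picard n s))) 0 t)
      by (rewrite RInt_Rminus by apply continuity_pt_picard; lra).
    eapply Rle_trans.
    { apply (abs_RInt_le_fun _ (fun s => w * exp (a * s))); auto.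
      - intros; apply continuity_pt_minus; apply continuity_pt_picard.
      - intros u. apply continuity_pt_mult;
          [apply continuity_pt_const; intros ? ?; auto | apply continuity_pt_exp_scal].
      - intros x Hx. eapply Rle_trans; [apply HL|].
        replace (w * exp (a * x)) with (L * (C0 * (1 / 2) ^ n * exp (a * x))) by (unfold w; ring).
        apply Rmult_le_compat_l; [lra | apply IHn; lra]. }
    assert (Hi : RInt (fun s => w * exp (a * s)) 0 t = w * RInt (fun s => exp (a * s)) 0 t)
      by (apply (RInt_scal (V := R_CompleteNormedModule) (fun s => exp (a * s)) 0 t w);
          apply ex_RInt_continuous_everywhere, continuity_pt_exp_scal).
    rewrite Hi, RInt_exp_scal by auto.
    apply Rmult_le_compat_l; auto. unfold Rdiv.
    apply Rmult_le_compat_r; [left; apply Rinv_0_lt_compat|]; lra. }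
  pose proof (Hb 0%nat); pose proof (Hb 1%nat); pose proof (Hb 2%nat).
  assert (3 * (w * (exp (a * t) / a)) = C0 * (1 / 2) ^ S n * exp (a * t))
    by (unfold w, a; simpl; field; lra).
  lra.
Qed.

Lemma picard_cauchy n m t i : 0 <= t -> (n <= m)%nat ->
  Rabs (comp i (picard m t) - comp i (picard n t))
    <= 2 * C0 * exp (a * t) * ((1 / 2) ^ n - (1 / 2) ^ m).
Proof.
  intros Ht Hnm. induction Hnm as [|m Hnm IH].
  { rewrite !Rminus_eq_0, Rabs_R0. lra. }
  pose proof (comp_le_dist1 i (picard (S m) t) (picard m t)) as Hstep.
  pose proof (picard_step m t Ht).
  pose proof (Rabs_triang (comp i (picard (S m) t) - comp i (picard m t))
                          (comp i (picard m t) - comp i (picard n t))) as Htri.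
  replace (comp i (picard (S m) t) - comp i (picard m t)
           + (comp i (picard m t) - comp i (picard n t)))
    with (comp i (picard (S m) t) - comp i (picard n t)) in Htri by ring.
  replace ((1 / 2) ^ S m) with ((1 / 2) ^ m / 2) by (simpl; field).
  lra.
Qed.

Lemma picard_cauchy_bound n m t i : 0 <= t -> (n <= m)%nat ->
  Rabs (comp i (picard m t) - comp i (picard n t)) <= 2 * C0 * (1 / 2) ^ n * exp (a * t).
Proof.
  intros Ht Hnm. eapply Rle_trans; [apply picard_cauchy; auto|].
  pose proof picard_const_ge0. pose proof (exp_pos (a * t)).
  assert (0 <= (1 / 2) ^ m) by (apply pow_le; lra).
  assert (0 <= C0 * exp (a * t)) by nra.
  nra.
Qed.

Definition picard_limit (i : nat) (t : R) : R := Lim_seq (fun n => comp i (picard n (Rmax t 0))).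

Lemma is_lim_picard_limit i t :
  is_lim_seq (fun n => comp i (picard n (Rmax t 0))) (picard_limit i t).
Proof.
  unfold picard_limit. apply Lim_seq_correct', ex_lim_seq_cauchy_corr.
  intros eps. set (T := Rmax t 0). assert (HT : 0 <= T) by apply Rmax_r.
  set (Bd := 2 * C0 * exp (a * T)).
  assert (HB : 0 <= Bd)
    by (unfold Bd; pose proof picard_const_ge0; pose proof (exp_pos (a * T)); nra).
  assert (Hd : 0 < eps / (Bd + 1)) by (apply Rdiv_lt_0_compat; [apply cond_pos | lra]).
  destruct (pow_lt_1_zero (1 / 2) ltac:(rewrite Rabs_right; lra) _ Hd) as [N HN].
  exists N. intros n m Hn Hm.
  assert (Hq : forall k, (N <= k)%nat -> Bd * (1 / 2) ^ k < eps).
  { intros k Hk. specialize (HN k Hk).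
    rewrite Rabs_right in HN by (apply Rle_ge, pow_le; lra).
    assert (0 <= (1 / 2) ^ k) by (apply pow_le; lra).
    apply Rle_lt_trans with ((Bd + 1) * (1 / 2) ^ k); [nra|].
    apply Rmult_lt_reg_l with (/ (Bd + 1)); [apply Rinv_0_lt_compat; lra|].
    rewrite <- Rmult_assoc, Rinv_l, Rmult_1_l by lra. unfold Rdiv in HN. lra. }
  destruct (Compare_dec.le_dec n m) as [Hnm | Hmn].
  - pose proof (picard_cauchy_bound n m T i HT Hnm). specialize (Hq n Hn).
    rewrite Rabs_minus_sym. unfold Bd in Hq. lra.
  - pose proof (picard_cauchy_bound m n T i HT ltac:(lia)). specialize (Hq m Hm).
    unfold Bd in Hq. lra.
Qed.

Lemma picard_limit_bound i t n : 0 <= t ->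
  Rabs (picard_limit i t - comp i (picard n t)) <= 2 * C0 * (1 / 2) ^ n * exp (a * t).
Proof.
  intros Ht. pose proof (is_lim_picard_limit i t) as Hl. rewrite Rmax_left in Hl by auto.
  apply (is_lim_seq_abs_le _ _ _ _ n Hl). intros m Hm. apply picard_cauchy_bound; auto.
Qed.

Lemma Rmax_0_lipschitz s t : Rabs (Rmax t 0 - Rmax s 0) <= Rabs (t - s).
Proof.
  unfold Rmax. destruct (Rle_dec t 0), (Rle_dec s 0); apply Rabs_le;
    pose proof (Rle_abs (t - s)); pose proof (Rle_abs (- (t - s))); rewrite Rabs_Ropp in *; lra.
Qed.

Lemma picard_limit_lipschitz i s t : Rabs (picard_limit i t - picard_limit i s) <= K * Rabs (t - s).
Proof.
  assert (Hmax : forall u, picard_limit i u = picard_limit i (Rmax u 0))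
    by (intros u; unfold picard_limit; rewrite (Rmax_left (Rmax u 0) 0) by apply Rmax_r; auto).
  rewrite (Hmax t), (Hmax s).
  set (t' := Rmax t 0). set (s' := Rmax s 0).
  assert (Ht : 0 <= t') by apply Rmax_r. assert (Hs : 0 <= s') by apply Rmax_r.
  apply Rle_trans with (K * Rabs (t' - s')).
  2:{ apply Rmult_le_compat_l; auto; apply Rmax_0_lipschitz. }
  apply (le_of_le_geometric _ _ (2 * C0 * exp (a * t') + 2 * C0 * exp (a * s'))).
  intros n.
  pose proof (picard_limit_bound i t' n Ht). pose proof (picard_limit_bound i s' n Hs).
  pose proof (picard_lipschitz n i s' t').
  pose proof (Rabs_triang (picard_limit i t' - comp i (picard n t'))
                          (comp i (picard n t') - comp i (picard n s'))) as T1.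
  pose proof (Rabs_triang (picard_limit i t' - comp i (picard n t')
                            + (comp i (picard n t') - comp i (picard n s')))
                          (comp i (picard n s') - picard_limit i s')) as T2.
  replace (picard_limit i t' - comp i (picard n t') + (comp i (picard n t') - comp i (picard n s'))
           + (comp i (picard n s') - picard_limit i s'))
    with (picard_limit i t' - picard_limit i s') in T2 by ring.
  rewrite (Rabs_minus_sym (comp i (picard n s'))) in T2.
  lra.
Qed.

Definition picard_solution (t : R) : vec3 := (picard_limit 0 t, picard_limit 1 t, picard_limit 2 t).

Lemma comp_picard_solution i t : comp i (picard_solution t) = picard_limit (min i 2) t.
Proof. destruct i as [|[|[|]]]; reflexivity. Qed.

Lemma picard_solution_lipschitz i s t :
  Rabs (comp i (picard_solution t) - comp i (picard_solution s)) <= K * Rabs (t - s).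
Proof. rewrite !comp_picard_solution. apply picard_limit_lipschitz. Qed.

Lemma picard_solution_bound i t n : 0 <= t ->
  Rabs (comp i (picard_solution t) - comp i (picard n t)) <= 2 * C0 * (1 / 2) ^ n * exp (a * t).
Proof.
  intros Ht. rewrite comp_picard_solution.
  replace (comp i (picard n t)) with (comp (min i 2) (picard n t))
    by (destruct i as [|[|[|]]]; auto).
  apply picard_limit_bound; auto.
Qed.

Lemma continuity_pt_picard_solution i t : continuity_pt (fun s => comp i (F (picard_solution s))) t.
Proof. apply (continuity_pt_field_comp picard_solution K picard_solution_lipschitz). Qed.

Lemma RInt_picard_close i n t : 0 <= t ->
  Rabs (RInt (fun s => comp i (F (picard n s))) 0 t
        - RInt (fun s => comp i (F (picard_solution s))) 0 t)
    <= t * (L * (6 * C0 * (1 / 2) ^ n * exp (a * t))).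
Proof.
  intros Ht. pose proof picard_rate_pos. pose proof picard_const_ge0.
  rewrite <- RInt_Rminus by (apply continuity_pt_picard || apply continuity_pt_picard_solution).
  replace t with (t - 0) at 2 by ring.
  apply abs_RInt_le_const; [lra | |].
  { apply ex_RInt_continuous_everywhere. intros; apply continuity_pt_minus;
      [apply continuity_pt_picard | apply continuity_pt_picard_solution]. }
  intros s Hs. eapply Rle_trans; [apply HL|]. apply Rmult_le_compat_l; [lra|].
  rewrite dist1_comp.
  assert (Hx : forall j, Rabs (comp j (picard n s) - comp j (picard_solution s))
                          <= 2 * C0 * (1 / 2) ^ n * exp (a * t)).
  { intros j. rewrite Rabs_minus_sym. eapply Rle_trans; [apply picard_solution_bound; lra|].
    assert (0 <= (1 / 2) ^ n) by (apply pow_le; lra).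
    apply Rmult_le_compat_l; [nra | apply exp_le_compat; nra]. }
  pose proof (Hx 0%nat); pose proof (Hx 1%nat); pose proof (Hx 2%nat). lra.
Qed.

Lemma picard_solution_integral i t : 0 <= t ->
  comp i (picard_solution t) = comp i X0 + RInt (fun s => comp i (F (picard_solution s))) 0 t.
Proof.
  intros Ht. pose proof picard_rate_pos. pose proof picard_const_ge0.
  set (I := RInt (fun s => comp i (F (picard_solution s))) 0 t).
  set (e := exp (a * t)). assert (He : 0 < e) by apply exp_pos.
  assert (Hbound : forall n, Rabs (comp i (picard_solution t) - (comp i X0 + I))
                              <= 0 + (4 * C0 * e + 6 * t * L * C0 * e) * (1 / 2) ^ n).
  { intros n. rewrite Rplus_0_l.
    assert (Hq : 0 <= (1 / 2) ^ n) by (apply pow_le; lra).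
    pose proof (picard_solution_bound i t (S n) Ht) as B1. rewrite picard_S in B1. fold e in B1.
    pose proof (RInt_picard_close i n t Ht) as B2. fold e I in B2.
    set (In := RInt (fun s => comp i (F (picard n s))) 0 t) in B1, B2.
    pose proof (Rabs_triang (comp i (picard_solution t) - (comp i X0 + In)) (In - I)) as Htri.
    replace (comp i (picard_solution t) - (comp i X0 + In) + (In - I))
      with (comp i (picard_solution t) - (comp i X0 + I)) in Htri by ring.
    assert (2 * C0 * (1 / 2) ^ S n * e + t * (L * (6 * C0 * (1 / 2) ^ n * e))
            <= (4 * C0 * e + 6 * t * L * C0 * e) * (1 / 2) ^ n).
    { simpl. assert (0 <= C0 * (1 / 2) ^ n * e) by (apply Rmult_le_pos; [apply Rmult_le_pos|]; lra).
      nra. }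
    lra. }
  pose proof (le_of_le_geometric _ _ _ Hbound).
  pose proof (Rabs_pos (comp i (picard_solution t) - (comp i X0 + I))).
  assert (Hz : Rabs (comp i (picard_solution t) - (comp i X0 + I)) = 0) by lra.
  apply Rabs_eq_0 in Hz. lra.
Qed.

Lemma picard_solution_derive i t : 0 < t ->
  is_derive (fun s => comp i (picard_solution s)) t (comp i (F (picard_solution t))).
Proof.
  intros Ht.
  set (f := fun s => comp i (F (picard_solution s))).
  assert (H1 : is_derive (fun b => RInt f 0 b) t (f t)).
  { apply (is_derive_RInt (V := R_CompleteNormedModule) f (fun b => RInt f 0 b) 0 t).
    - exists (mkposreal 1 Rlt_0_1). intros y _.
      apply RInt_correct, ex_RInt_continuous_everywhere, continuity_pt_picard_solution.
    - apply continuity_pt_filterlim, continuity_pt_picard_solution. }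
  assert (H2 : is_derive (fun b => comp i X0 + RInt f 0 b) t (f t)).
  { pose proof (is_derive_plus (K := R_AbsRing) (V := R_NormedModule) (fun _ => comp i X0)
                  (fun b => RInt f 0 b) t zero (f t)
                  (is_derive_const (K := R_AbsRing) (V := R_NormedModule) _ _) H1) as H3.
    rewrite plus_zero_l in H3. exact H3. }
  apply is_derive_ext_loc with (fun b => comp i X0 + RInt f 0 b); auto.
  exists (mkposreal t Ht). intros y Hy. simpl.
  unfold ball in Hy; simpl in Hy; unfold AbsRing_ball, abs, minus, plus, opp in Hy; simpl in Hy.
  apply Rabs_def2 in Hy. rewrite picard_solution_integral by lra. reflexivity.
Qed.

Lemma picard_solution_0 : picard_solution 0 = X0.
Proof.
  assert (H : forall i, comp i (picard_solution 0) = comp i X0).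
  { intros i. rewrite picard_solution_integral, RInt_point by lra. unfold zero; simpl. ring. }
  destruct X0 as [[x1 x2] x3].
  pose proof (H 0%nat) as H0; pose proof (H 1%nat) as H1; pose proof (H 2%nat) as H2.
  unfold picard_solution, comp, c1, c2, c3 in *. simpl in *. rewrite H0, H1, H2. reflexivity.
Qed.

Lemma picard_solution_is_solution : is_solution F picard_solution.
Proof.
  split.
  - intros t Ht. split; [|split];
      [apply (picard_solution_derive 0 t Ht) | apply (picard_solution_derive 1 t Ht)
      | apply (picard_solution_derive 2 t Ht)].
  - intros eps Heps. exists (eps / (K + 1)). split; [apply Rdiv_lt_0_compat; lra|].
    intros t Ht.
    assert (Hb : forall i, Rabs (comp i (picard_solution t) - comp i (picard_solution 0)) < eps).
    { intros i. eapply Rle_lt_trans; [apply picard_solution_lipschitz|].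
      rewrite Rminus_0_r, Rabs_right by lra.
      apply Rle_lt_trans with ((K + 1) * t); [nra|].
      apply Rmult_lt_reg_l with (/ (K + 1)); [apply Rinv_0_lt_compat; lra|].
      rewrite <- Rmult_assoc, Rinv_l, Rmult_1_l by lra. unfold Rdiv in Ht. lra. }
    split; [|split]; [apply (Hb 0%nat) | apply (Hb 1%nat) | apply (Hb 2%nat)].
Qed.

End Picard.

Lemma picard_lindelof (F : vec3 -> vec3) (L K : R) (X0 : vec3) : 0 < L -> 0 <= K ->
  (forall i a b, Rabs (comp i (F a) - comp i (F b)) <= L * dist1 a b) ->
  (forall i a, Rabs (comp i (F a)) <= K) ->
  exists x, is_solution F x /\ x 0 = X0.
Proof.
  intros. exists (picard_solution F X0).
  split; [apply (picard_solution_is_solution F L K) | apply (picard_solution_0 F L K)]; auto.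
Qed.

Lemma frac_Ap_bounds Ap A : 0 < Ap -> 0 <= A -> 0 < Ap / (Ap + A) <= 1.
Proof.
  intros. split; [apply Rdiv_lt_0_compat; lra|].
  apply Rmult_le_reg_r with (Ap + A); [lra|].
  unfold Rdiv; rewrite Rmult_assoc, Rinv_l by lra. lra.
Qed.

Lemma frac_Ap_diff_ge Ap Ax Ay : 0 < Ap -> 0 <= Ax -> 0 <= Ay ->
  Ap / (Ap + Ax) - Ap / (Ap + Ay) >= negp (Ay - Ax) / Ap.
Proof.
  intros HAp Hx Hy.
  replace (Ap / (Ap + Ax) - Ap / (Ap + Ay)) with (Ap * (Ay - Ax) / ((Ap + Ax) * (Ap + Ay)))
    by (field; lra).
  assert (0 < (Ap + Ax) * (Ap + Ay)) by nra.
  destruct (Rle_dec Ax Ay).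
  - rewrite negp_nonneg by lra. unfold Rdiv. rewrite Rmult_0_l. apply Rle_ge.
    apply Rmult_le_pos; [nra | left; apply Rinv_0_lt_compat; lra].
  - rewrite negp_neg by lra. apply Rle_ge.
    apply Rmult_le_reg_r with (Ap * ((Ap + Ax) * (Ap + Ay))); [nra|].
    replace ((Ay - Ax) / Ap * (Ap * ((Ap + Ax) * (Ap + Ay))))
      with ((Ay - Ax) * ((Ap + Ax) * (Ap + Ay))) by (field; lra).
    replace (Ap * (Ay - Ax) / ((Ap + Ax) * (Ap + Ay)) * (Ap * ((Ap + Ax) * (Ap + Ay))))
      with (Ap * Ap * (Ay - Ax)) by (field; lra).
    assert (Ap * Ap <= (Ap + Ax) * (Ap + Ay)) by nra.
    nra.
Qed.

Lemma frac_Ap_diff_scaled_ge Ap Ax Ay z B : 0 < Ap -> 0 <= Ax -> 0 <= Ay -> 0 <= z <= B ->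
  z * (Ap / (Ap + Ax) - Ap / (Ap + Ay)) >= B / Ap * negp (Ay - Ax).
Proof.
  intros HAp HAx HAy Hz. pose proof (frac_Ap_diff_ge Ap Ax Ay HAp HAx HAy).
  assert (negp (Ay - Ax) / Ap <= 0)
    by (apply Rdiv_nonpos_pos; [apply negp_le0 | lra]).
  replace (B / Ap * negp (Ay - Ax)) with (B * (negp (Ay - Ax) / Ap)) by (field; lra).
  nra.
Qed.

Lemma frac_Ap_lipschitz Ap A A' : 0 < Ap -> 0 <= A -> 0 <= A' ->
  Rabs (Ap / (Ap + A) - Ap / (Ap + A')) <= / Ap * Rabs (A - A').
Proof.
  intros HAp HA HA'.
  replace (Ap / (Ap + A) - Ap / (Ap + A')) with ((A' - A) * (Ap / ((Ap + A) * (Ap + A'))))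
    by (field; lra).
  rewrite Rabs_mult, Rabs_minus_sym, Rmult_comm. apply Rmult_le_compat_r; [apply Rabs_pos|].
  assert (0 < (Ap + A) * (Ap + A')) by nra.
  rewrite Rabs_right by (apply Rle_ge, Rlt_le, Rdiv_lt_0_compat; lra).
  apply Rmult_le_reg_r with (Ap * ((Ap + A) * (Ap + A'))); [apply Rmult_lt_0_compat; lra|].
  replace (Ap / ((Ap + A) * (Ap + A')) * (Ap * ((Ap + A) * (Ap + A')))) with (Ap * Ap)
    by (field; lra).
  replace (/ Ap * (Ap * ((Ap + A) * (Ap + A')))) with ((Ap + A) * (Ap + A')) by (field; lra).
  nra.
Qed.

Lemma incidence_eq nu gamma M Ap A : 0 < Ap + A ->
  nu * (gamma * M / (Ap + A)) * A = nu * gamma * M * (1 - Ap / (Ap + A)).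
Proof. intros; field; lra. Qed.

Lemma one_minus_frac_Ap_neg Ap A : 0 < Ap -> A < 0 -> - Ap / 2 < A ->
  2 * A / Ap <= 1 - Ap / (Ap + A) <= 0.
Proof.
  intros HAp HA HA2. replace (1 - Ap / (Ap + A)) with (A / (Ap + A)) by (field; lra). split.
  - apply Rmult_le_reg_r with (Ap * (Ap + A)); [nra|].
    replace (2 * A / Ap * (Ap * (Ap + A))) with (2 * A * (Ap + A)) by (field; lra).
    replace (A / (Ap + A) * (Ap * (Ap + A))) with (A * Ap) by (field; lra). nra.
  - unfold Rdiv. assert (0 < / (Ap + A)) by (apply Rinv_0_lt_compat; lra). nra.
Qed.

Lemma ge_rate_negp_sum (d a1 a2 a3 k m1 m2 m3 : R) :
  0 <= a1 <= k -> 0 <= a2 <= k -> 0 <= a3 <= k -> m1 <= 0 -> m2 <= 0 -> m3 <= 0 ->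
  d >= a1 * m1 + a2 * m2 + a3 * m3 -> d >= k * (m1 + m2 + m3).
Proof. intros. nra. Qed.

Lemma scaled_ge_negp (c U e E : R) : 0 <= c -> 0 < e <= E -> c * U * e >= c * E * negp U.
Proof.
  intros Hc He. destruct (Rlt_le_dec U 0).
  - rewrite negp_neg by auto. assert (U * e >= U * E) by nra. nra.
  - rewrite negp_nonneg by auto. rewrite Rmult_0_r. apply Rle_ge.
    apply Rmult_le_pos; [apply Rmult_le_pos|]; lra.
Qed.

Lemma ge_negp z : z >= negp z.
Proof. apply Rle_ge, negp_le. Qed.

Lemma mul_unit_ge_negp d w : 0 <= w <= 1 -> d * w >= negp d.
Proof.
  intros Hw. destruct (Rlt_le_dec d 0); [rewrite negp_neg | rewrite negp_nonneg]; nra.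
Qed.

Lemma incidence_factor_ge Ap M A B : 0 < Ap -> Rabs M <= B -> - Ap / 2 < A ->
  M * (1 - Ap / (Ap + A)) >= negp M + (2 * B / Ap) * negp A.
Proof.
  intros HAp HM HA2. apply Rabs_le_between in HM.
  assert (HB : 0 <= 2 * B / Ap) by (apply Rdiv_nonneg_pos; lra).
  destruct (Rlt_le_dec A 0) as [An | Ap0].
  - pose proof (one_minus_frac_Ap_neg Ap A HAp An HA2) as [W1 W2].
    rewrite (negp_neg A) by auto.
    destruct (Rlt_le_dec M 0).
    + rewrite negp_neg by auto. nra.
    + rewrite negp_nonneg by auto.
      replace (2 * B / Ap * A) with (B * (2 * A / Ap)) by (field; lra).
      assert (2 * A / Ap <= 0) by (apply Rdiv_nonpos_pos; lra).
      nra.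
  - rewrite (negp_nonneg A) by auto. pose proof (frac_Ap_bounds Ap A HAp Ap0).
    destruct (Rlt_le_dec M 0).
    + rewrite negp_neg by auto. nra.
    + rewrite negp_nonneg by auto. nra.
Qed.

Lemma A_gt_of_negsq_small Ap A : 0 < Ap -> negsq A < Ap * Ap / 4 -> - Ap / 2 < A.
Proof.
  intros HAp H. destruct (Rlt_le_dec A 0); [|lra].
  unfold negsq in H. rewrite negp_neg in H by auto. nra.
Qed.

Section Fields.
Variables (r rho sigma mu delta nu eta gamma alpha Ap : R).
Hypotheses (Hr : 0 < r < 1) (Hrho : 0 < rho) (Hsigma : 0 < sigma) (Hmu : 0 < mu)
  (Hdelta : 0 < delta) (Hnu : 0 < nu) (Heta : 0 < eta) (Hgamma : 1 <= gamma)
  (Halpha : 0 <= alpha <= 1) (HAp : 0 < Ap).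

Let main := main_field r rho sigma mu delta nu eta gamma alpha Ap.
Let aux := aux_field r rho sigma mu delta nu eta gamma alpha Ap.

(* On the box of half-width B, exp (- sigma (M + A + U)) <= exp (3 sigma B). *)
Let rate (B : R) : R :=
  rho * exp (3 * sigma * B) + eta + nu * gamma * (1 + 2 * B / Ap) + alpha * B / Ap.

Lemma rate_bounds B : 0 <= B ->
  0 <= B / Ap /\ 1 <= exp (3 * sigma * B) /\
  rho * exp (3 * sigma * B) + eta <= rate B /\ nu * gamma * (2 * B / Ap) <= rate B /\
  nu * gamma <= rate B /\ alpha * B / Ap <= rate B.
Proof.
  intros HB.
  assert (HBA : 0 <= B / Ap) by (apply Rdiv_nonneg_pos; lra).
  assert (HE : 1 <= exp (3 * sigma * B)) by (rewrite <- exp_0; apply exp_le_compat; nra).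
  assert (0 <= alpha * B / Ap) by (unfold Rdiv in *; rewrite Rmult_assoc; apply Rmult_le_pos; lra).
  assert (0 <= nu * gamma) by nra.
  unfold rate, Rdiv in *. repeat split; nra.
Qed.

Lemma main_field_quasi_positive_at M A U B :
  0 <= B -> Rabs M <= B -> Rabs A <= B -> Rabs U <= B -> - Ap / 2 < A ->
  let F := main (M, A, U) in let s := negp M + negp A + negp U in
  (M < 0 -> c1 F >= rate B * s) /\ (A < 0 -> c2 F >= rate B * s) /\
  (U < 0 -> c3 F >= rate B * s).
Proof.
  intros HB HM HA HU HA2 F s.
  destruct (rate_bounds B HB) as [HBA [HE [R1 [R2 [R3 R4]]]]].
  set (E := exp (3 * sigma * B)) in *.
  assert (He : 0 < exp (- sigma * (M + A + U)) <= E).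
  { split; [apply exp_pos | apply exp_le_compat].
    apply Rabs_le_between in HM, HA, HU. nra. }
  pose proof (negp_le0 M); pose proof (negp_le0 A); pose proof (negp_le0 U).
  assert (0 < rho * E) by nra.
  assert (0 <= r * rho * E <= rho * E)
    by (rewrite Rmult_assoc; destruct Hr; split; nra).
  assert (0 <= (1 - r) * rho * E <= rho * E)
    by (rewrite Rmult_assoc; destruct Hr; split; nra).
  assert (Hng : 0 <= nu * gamma * (2 * B / Ap)) by (apply Rmult_le_pos; nra).
  unfold F, s, main, main_field, c1, c2, c3; simpl.
  set (e := exp (- sigma * (M + A + U))) in *.
  split; [|split]; intros Hneg.
  - apply (ge_rate_negp_sum _ 0 0 (r * rho * E)); try lra; try (split; nra).
    pose proof (scaled_ge_negp (r * rho) U e E ltac:(nra) He).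
    assert (0 < Ap / (Ap + A)) by (apply Rdiv_lt_0_compat; lra).
    assert (0 <= alpha * (Ap / (Ap + A))) by (apply Rmult_le_pos; lra).
    assert (alpha * (Ap / (Ap + A)) * M <= 0) by nra.
    assert (mu * M < 0) by nra.
    lra.
  - apply (ge_rate_negp_sum _ 0 (nu * gamma * (2 * B / Ap)) ((1 - r) * rho * E + eta));
      try lra; try (split; nra).
    pose proof (scaled_ge_negp ((1 - r) * rho) U e E ltac:(nra) He).
    rewrite incidence_eq by lra.
    assert (eta * U >= eta * negp U) by (pose proof (ge_negp U); nra).
    pose proof (one_minus_frac_Ap_neg Ap A HAp Hneg HA2) as [W1 W2].
    rewrite (negp_neg A) by auto.
    assert (- (M * (1 - Ap / (Ap + A))) >= B * (2 * A / Ap)).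
    { apply Rabs_le_between in HM.
      assert (2 * A / Ap <= 0) by (apply Rdiv_nonpos_pos; lra).
      destruct (Rlt_le_dec M 0); nra. }
    replace (nu * gamma * (2 * B / Ap) * A) with (nu * gamma * (B * (2 * A / Ap))) by (field; lra).
    assert (0 <= nu * gamma) by nra.
    nra.
  - apply (ge_rate_negp_sum _ (nu * gamma) (nu * gamma * (2 * B / Ap)) 0);
      try lra; try (split; nra).
    rewrite incidence_eq by lra.
    pose proof (incidence_factor_ge Ap M A B HAp HM HA2).
    assert (nu * gamma * (M * (1 - Ap / (Ap + A))) >= nu * gamma * (negp M + 2 * B / Ap * negp A))
      by (apply Rle_ge, Rmult_le_compat_l; nra).
    nra.
Qed.

Lemma aux_field_quasi_positive_at M A U B :
  0 <= B -> Rabs M <= B -> Rabs A <= B -> Rabs U <= B -> - Ap / 2 < A ->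
  let G := aux (M, A, U) in let s := negp M + negp A + negp U in
  (M < 0 -> c1 G >= rate B * s) /\ (A < 0 -> c2 G >= rate B * s) /\
  (U < 0 -> c3 G >= rate B * s).
Proof.
  intros HB HM HA HU HA2 G s.
  destruct (rate_bounds B HB) as [HBA [HE [R1 [R2 [R3 R4]]]]].
  set (E := exp (3 * sigma * B)) in *.
  assert (He : 0 < exp (- sigma * M) <= E).
  { split; [apply exp_pos | apply exp_le_compat]. apply Rabs_le_between in HM. nra. }
  pose proof (negp_le0 M); pose proof (negp_le0 A); pose proof (negp_le0 U).
  assert (0 < rho * E) by nra.
  assert (0 <= r * rho * E <= rho * E) by (rewrite Rmult_assoc; destruct Hr; split; nra).
  assert (0 <= (1 - r) * rho + eta <= rho * E + eta) by (destruct Hr; split; nra).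
  assert (Hng : 0 <= nu * gamma * (2 * B / Ap)) by (apply Rmult_le_pos; nra).
  unfold G, s, aux, aux_field, c1, c2, c3; simpl.
  set (e := exp (- sigma * M)) in *.
  split; [|split]; intros Hneg.
  - apply (ge_rate_negp_sum _ 0 0 (r * rho * E)); try lra.
    pose proof (scaled_ge_negp (r * rho) U e E ltac:(destruct Hr; nra) He).
    assert (0 < Ap / (Ap + A)) by (apply Rdiv_lt_0_compat; lra).
    assert (0 <= alpha * (Ap / (Ap + A))) by (apply Rmult_le_pos; lra).
    assert (alpha * (Ap / (Ap + A)) * M <= 0) by nra.
    assert (mu * M < 0) by nra.
    lra.
  - apply (ge_rate_negp_sum _ 0 0 ((1 - r) * rho + eta)); try lra.
    assert (((1 - r) * rho + eta) * U >= ((1 - r) * rho + eta) * negp U)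
      by (apply Rle_ge, Rmult_le_compat_l; [lra | apply negp_le]).
    assert (delta * A < 0) by nra.
    lra.
  - apply (ge_rate_negp_sum _ (nu * gamma) (nu * gamma * (2 * B / Ap)) 0);
      try lra; try (split; nra).
    rewrite incidence_eq by lra.
    pose proof (incidence_factor_ge Ap M A B HAp HM HA2).
    assert (nu * gamma * (M * (1 - Ap / (Ap + A))) >= nu * gamma * (negp M + 2 * B / Ap * negp A))
      by (apply Rle_ge, Rmult_le_compat_l; nra).
    assert (- (eta + delta) * U >= 0) by nra.
    nra.
Qed.

Lemma aux_dominates_main_at Mx Ax Ux My Ay Uy B : 0 <= B ->
  0 <= Mx <= B -> 0 <= Ax <= B -> 0 <= Ux <= B ->
  0 <= My <= B -> 0 <= Ay <= B -> 0 <= Uy <= B ->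
  let F := main (Mx, Ax, Ux) in let G := aux (My, Ay, Uy) in
  let s := negp (My - Mx) + negp (Ay - Ax) + negp (Uy - Ux) in
  (My - Mx < 0 -> c1 G - c1 F >= rate B * s) /\
  (Ay - Ax < 0 -> c2 G - c2 F >= rate B * s) /\
  (Uy - Ux < 0 -> c3 G - c3 F >= rate B * s).
Proof.
  intros HB HMx HAx HUx HMy HAy HUy F G s.
  destruct (rate_bounds B HB) as [HBA [HE [R1 [R2 [R3 R4]]]]].
  pose proof (negp_le0 (My - Mx)); pose proof (negp_le0 (Ay - Ax)); pose proof (negp_le0 (Uy - Ux)).
  assert (0 <= r * rho <= rho * exp (3 * sigma * B)) by (destruct Hr; split; nra).
  assert (0 <= (1 - r) * rho + eta <= rho * exp (3 * sigma * B) + eta) by (destruct Hr; split; nra).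
  assert (0 <= alpha * B / Ap) by (unfold Rdiv in *; rewrite Rmult_assoc; apply Rmult_le_pos; lra).
  assert (0 <= nu * gamma) by nra.
  assert (0 <= nu * gamma * (B / Ap) <= nu * gamma * (2 * B / Ap))
    by (split; [apply Rmult_le_pos | apply Rmult_le_compat_l]; unfold Rdiv in *; lra).
  pose proof (frac_Ap_bounds Ap Ax HAp ltac:(lra)) as Gx.
  pose proof (frac_Ap_bounds Ap Ay HAp ltac:(lra)) as Gy.
  pose proof (frac_Ap_diff_scaled_ge Ap Ax Ay Mx B HAp ltac:(lra) ltac:(lra) HMx) as GMx.
  pose proof (frac_Ap_diff_scaled_ge Ap Ax Ay My B HAp ltac:(lra) ltac:(lra) HMy) as GMy.
  pose proof (exp_pos (- sigma * (Mx + Ax + Ux))).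
  assert (exp (- sigma * (Mx + Ax + Ux)) <= 1) by (apply exp_le_1; nra).
  assert (exp (- sigma * My) <= 1) by (apply exp_le_1; nra).
  unfold F, G, s, main, aux, main_field, aux_field, c1, c2, c3; simpl.
  rewrite !incidence_eq by lra.
  set (ex := exp (- sigma * (Mx + Ax + Ux))) in *. set (ey := exp (- sigma * My)) in *.
  set (gx := Ap / (Ap + Ax)) in *. set (gy := Ap / (Ap + Ay)) in *.
  split; [|split]; intros Hneg.
  - apply (ge_rate_negp_sum _ 0 (alpha * B / Ap) (r * rho)); try lra.
    assert (ex <= ey) by (apply exp_le_compat; nra).
    assert (Uy * ey - Ux * ex >= negp (Uy - Ux)).
    { pose proof (mul_unit_ge_negp (Uy - Ux) ey ltac:(lra)). nra. }
    assert (gx * Mx - gy * My >= B / Ap * negp (Ay - Ax)) by nra.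
    assert (alpha * (gx * Mx - gy * My) >= alpha * (B / Ap * negp (Ay - Ax)))
      by (apply Rle_ge, Rmult_le_compat_l; lra).
    assert (r * rho * (Uy * ey - Ux * ex) >= r * rho * negp (Uy - Ux))
      by (apply Rle_ge, Rmult_le_compat_l; lra).
    assert (mu * (Mx - My) >= 0) by nra.
    unfold Rdiv in *. nra.
  - apply (ge_rate_negp_sum _ 0 0 ((1 - r) * rho + eta)); try lra.
    assert (0 <= nu * gamma * Mx * (1 - gx)) by (apply Rmult_le_pos; nra).
    assert ((1 - r) * rho * (Uy - Ux * ex) >= (1 - r) * rho * negp (Uy - Ux))
      by (destruct Hr; apply Rle_ge, Rmult_le_compat_l; pose proof (ge_negp (Uy - Ux)); nra).
    assert (eta * (Uy - Ux) >= eta * negp (Uy - Ux)) by (pose proof (ge_negp (Uy - Ux)); nra).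
    assert (delta * (Ay - Ax) < 0) by nra.
    nra.
  - apply (ge_rate_negp_sum _ (nu * gamma) (nu * gamma * (B / Ap)) 0); try lra.
    pose proof (mul_unit_ge_negp (My - Mx) (1 - gy) ltac:(lra)).
    assert (nu * gamma * (My * (1 - gy) - Mx * (1 - gx))
            >= nu * gamma * (negp (My - Mx) + B / Ap * negp (Ay - Ax))).
    { apply Rle_ge, Rmult_le_compat_l; [nra|].
      replace (My * (1 - gy) - Mx * (1 - gx)) with ((My - Mx) * (1 - gy) + Mx * (gx - gy)) by ring.
      lra. }
    assert ((eta + delta) * (Uy - Ux) < 0) by nra.
    nra.
Qed.

Lemma rate_ge0 B : 0 <= B -> 0 <= rate B.
Proof. intros HB. destruct (rate_bounds B HB) as [_ [_ [_ [_ [R3 _]]]]]. nra. Qed.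

Lemma main_field_quasi_positive : quasi_positive main.
Proof.
  exists (Ap * Ap / 4). split; [nra|]. intros B HB. exists (rate B). split; [apply rate_ge0; auto|].
  intros [[M A] U]. cbn [c1 c2 c3 fst snd]. intros HM HA HU Hsmall.
  apply main_field_quasi_positive_at; auto.
  apply A_gt_of_negsq_small; auto. pose proof (negsq_ge0 M); pose proof (negsq_ge0 U). lra.
Qed.

Lemma aux_field_quasi_positive : quasi_positive aux.
Proof.
  exists (Ap * Ap / 4). split; [nra|]. intros B HB. exists (rate B). split; [apply rate_ge0; auto|].
  intros [[M A] U]. cbn [c1 c2 c3 fst snd]. intros HM HA HU Hsmall.
  apply aux_field_quasi_positive_at; auto.
  apply A_gt_of_negsq_small; auto. pose proof (negsq_ge0 M); pose proof (negsq_ge0 U). lra.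
Qed.

Lemma main_dominated_by_aux : dominated_solutions main aux.
Proof.
  apply dominated_solutions_of_quasi_monotone;
    [apply main_field_quasi_positive | apply aux_field_quasi_positive|].
  intros B HB. exists (rate B). split; [apply rate_ge0; auto|].
  intros [[Mx Ax] Ux] [[My Ay] Uy]. unfold nonneg3, le3. cbn [c1 c2 c3 fst snd E0].
  intros [? [? ?]] [? [? ?]] [? [? ?]] [? [? ?]].
  apply aux_dominates_main_at; auto.
Qed.

End Fields.

Lemma exp_lipschitz_nonpos u v : u <= 0 -> v <= 0 -> Rabs (exp u - exp v) <= Rabs (u - v).
Proof.
  assert (Hw : forall u v, v <= u -> u <= 0 -> Rabs (exp u - exp v) <= Rabs (u - v)).
  { intros x y Hyx Hx.
    assert (exp y <= exp x) by (apply exp_le_compat; auto).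
    rewrite !Rabs_right by lra.
    replace (exp x - exp y) with (exp x * (1 - exp (y - x)))
      by (rewrite Rmult_minus_distr_l, Rmult_1_r, <- exp_plus; f_equal; f_equal; ring).
    pose proof (exp_ineq1_le (y - x)). pose proof (exp_le_1 x Hx). pose proof (exp_pos x).
    assert (exp (y - x) <= 1) by (apply exp_le_1; lra). nra. }
  intros Hu Hv. destruct (Rle_dec v u); [apply Hw; auto|].
  rewrite Rabs_minus_sym, (Rabs_minus_sym u). apply Hw; lra.
Qed.

Lemma Rabs_mult_diff_le x y x' y' Bx By : Rabs x' <= Bx -> Rabs y <= By ->
  Rabs (x * y - x' * y') <= By * Rabs (x - x') + Bx * Rabs (y - y').
Proof.
  intros H1 H2.
  replace (x * y - x' * y') with ((x - x') * y + x' * (y - y')) by ring.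
  eapply Rle_trans; [apply Rabs_triang|]. rewrite !Rabs_mult.
  pose proof (Rabs_pos (x - x')); pose proof (Rabs_pos (y - y')).
  pose proof (Rabs_pos y); pose proof (Rabs_pos x'). nra.
Qed.

Lemma Rabs_comb4_le a1 a2 a3 a4 x1 x2 x3 x4 b :
  Rabs x1 <= b -> Rabs x2 <= b -> Rabs x3 <= b -> Rabs x4 <= b ->
  Rabs (a1 * x1 + a2 * x2 + a3 * x3 + a4 * x4) <= (Rabs a1 + Rabs a2 + Rabs a3 + Rabs a4) * b.
Proof.
  intros.
  pose proof (Rabs_triang (a1 * x1 + a2 * x2 + a3 * x3) (a4 * x4)).
  pose proof (Rabs_triang (a1 * x1 + a2 * x2) (a3 * x3)).
  pose proof (Rabs_triang (a1 * x1) (a2 * x2)).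
  rewrite !Rabs_mult in *.
  pose proof (Rabs_pos a1); pose proof (Rabs_pos a2);
    pose proof (Rabs_pos a3); pose proof (Rabs_pos a4).
  assert (Rabs a1 * Rabs x1 <= Rabs a1 * b) by (apply Rmult_le_compat_l; auto).
  assert (Rabs a2 * Rabs x2 <= Rabs a2 * b) by (apply Rmult_le_compat_l; auto).
  assert (Rabs a3 * Rabs x3 <= Rabs a3 * b) by (apply Rmult_le_compat_l; auto).
  assert (Rabs a4 * Rabs x4 <= Rabs a4 * b) by (apply Rmult_le_compat_l; auto).
  lra.
Qed.

Section MainField.
Variables (r rho sigma mu delta nu eta gamma alpha Ap S : R).
Hypotheses (Hr : 0 < r < 1) (Hrho : 0 < rho) (Hsigma : 0 < sigma) (Hmu : 0 < mu)
  (Hdelta : 0 < delta) (Hnu : 0 < nu) (Heta : 0 < eta) (Hgamma : 1 <= gamma)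
  (Halpha : 0 <= alpha <= 1) (HAp : 0 < Ap) (HS : 0 <= S).

Let main := main_field r rho sigma mu delta nu eta gamma alpha Ap.

Definition box_lipschitz_const : R :=
  (rho + alpha + nu * gamma + mu + eta + delta) * (1 + S * sigma + S / Ap).

Lemma box_lipschitz_const_ge0 : 0 <= box_lipschitz_const.
Proof.
  unfold box_lipschitz_const.
  assert (0 <= S / Ap) by (apply Rdiv_nonneg_pos; lra).
  apply Rmult_le_pos; nra.
Qed.

Lemma main_field_terms_lipschitz M A U M' A' U' :
  0 <= M <= S -> 0 <= A <= S -> 0 <= U <= S -> 0 <= M' <= S -> 0 <= A' <= S -> 0 <= U' <= S ->
  let n := dist1 (M, A, U) (M', A', U') in let lam := 1 + S * sigma + S / Ap in
  let g := Ap / (Ap + A) in let g' := Ap / (Ap + A') in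
  Rabs (U * exp (- sigma * (M + A + U)) - U' * exp (- sigma * (M' + A' + U'))) <= lam * n /\
  Rabs (g * M - g' * M') <= lam * n /\ Rabs (M * (1 - g) - M' * (1 - g')) <= lam * n.
Proof.
  intros HM HA HU HM' HA' HU' n lam g g'.
  assert (HSA : 0 <= S / Ap) by (apply Rdiv_nonneg_pos; lra).
  assert (HSs : 0 <= S * sigma) by nra.
  assert (Hn : n = Rabs (M - M') + Rabs (A - A') + Rabs (U - U')) by reflexivity.
  pose proof (Rabs_pos (M - M')); pose proof (Rabs_pos (A - A')); pose proof (Rabs_pos (U - U')).
  assert (Hee : Rabs (exp (- sigma * (M + A + U)) - exp (- sigma * (M' + A' + U'))) <= sigma * n).
  { eapply Rle_trans; [apply exp_lipschitz_nonpos; nra|].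
    replace (- sigma * (M + A + U) - - sigma * (M' + A' + U'))
      with (- sigma * ((M - M') + (A - A') + (U - U'))) by ring.
    rewrite Rabs_mult, Rabs_Ropp, Rabs_right by lra. apply Rmult_le_compat_l; [lra|].
    rewrite Hn. pose proof (Rabs_triang (M - M' + (A - A')) (U - U')).
    pose proof (Rabs_triang (M - M') (A - A')). lra. }
  assert (He : Rabs (exp (- sigma * (M + A + U))) <= 1)
    by (rewrite Rabs_right by (apply Rle_ge, Rlt_le, exp_pos); apply exp_le_1; nra).
  pose proof (frac_Ap_bounds Ap A HAp ltac:(lra)) as Hg.
  pose proof (frac_Ap_bounds Ap A' HAp ltac:(lra)) as Hg'.
  fold g in Hg. fold g' in Hg'.
  assert (HSg : S * Rabs (g - g') <= S / Ap * n).
  { unfold Rdiv; rewrite Rmult_assoc; apply Rmult_le_compat_l; auto.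
    eapply Rle_trans; [apply frac_Ap_lipschitz; lra|].
    apply Rmult_le_compat_l; [left; apply Rinv_0_lt_compat; lra | rewrite Hn; lra]. }
  unfold lam. rewrite Hn in *. split; [|split].
  - eapply Rle_trans; [apply (Rabs_mult_diff_le _ _ _ _ S 1); [rewrite Rabs_right; lra | auto]|].
    assert (S * Rabs (exp (- sigma * (M + A + U)) - exp (- sigma * (M' + A' + U')))
            <= S * (sigma * n))
      by (apply Rmult_le_compat_l; auto).
    rewrite Hn in *. nra.
  - eapply Rle_trans; [apply (Rabs_mult_diff_le g M g' M' 1 S); rewrite Rabs_right; lra|]. nra.
  - eapply Rle_trans;
      [apply (Rabs_mult_diff_le M (1 - g) M' (1 - g') S 1); rewrite Rabs_right; lra|].
    replace (1 - g - (1 - g')) with (- (g - g')) by ring. rewrite Rabs_Ropp. nra.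
Qed.

Lemma main_field_lipschitz_on_box M A U M' A' U' :
  0 <= M <= S -> 0 <= A <= S -> 0 <= U <= S -> 0 <= M' <= S -> 0 <= A' <= S -> 0 <= U' <= S ->
  forall i, Rabs (comp i (main (M, A, U)) - comp i (main (M', A', U')))
            <= box_lipschitz_const * dist1 (M, A, U) (M', A', U').
Proof.
  intros HM HA HU HM' HA' HU' i.
  destruct (main_field_terms_lipschitz M A U M' A' U' HM HA HU HM' HA' HU') as [D1 [D2 D3]].
  set (n := dist1 (M, A, U) (M', A', U')) in *.
  set (lam := 1 + S * sigma + S / Ap) in *.
  assert (HSA : 0 <= S / Ap) by (apply Rdiv_nonneg_pos; lra).
  assert (Hlam : 1 <= lam) by (unfold lam; nra).
  assert (Hn : n = Rabs (M - M') + Rabs (A - A') + Rabs (U - U')) by reflexivity.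
  pose proof (Rabs_pos (M - M')); pose proof (Rabs_pos (A - A')); pose proof (Rabs_pos (U - U')).
  assert (Hdiff : forall z, Rabs z <= n -> Rabs z <= lam * n) by (intros; nra).
  assert (DM := Hdiff (M - M') ltac:(lra)).
  assert (DA := Hdiff (A - A') ltac:(lra)).
  assert (DU := Hdiff (U - U') ltac:(lra)).
  assert (D0 : Rabs 0 <= lam * n) by (rewrite Rabs_R0; nra).
  assert (Hcoef : forall a1 a2 a3 a4, 0 <= a1 -> 0 <= a2 -> 0 <= a3 -> 0 <= a4 ->
                    a1 + a2 + a3 + a4 <= rho + alpha + nu * gamma + mu + eta + delta ->
                    (a1 + a2 + a3 + a4) * (lam * n) <= box_lipschitz_const * n).
  { intros. unfold box_lipschitz_const. fold lam. rewrite <- Rmult_assoc.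
    apply Rmult_le_compat_r; [lra|]. apply Rmult_le_compat_r; lra. }
  destruct Hr as [Hr0 Hr1].
  assert (0 <= nu * gamma) by nra.
  unfold main, main_field, comp. destruct i as [|[|]]; unfold c1, c2, c3; simpl.
  - match goal with |- Rabs (?x - ?y) <= _ =>
      replace (x - y)
        with (r * rho * (U * exp (- sigma * (M + A + U)) - U' * exp (- sigma * (M' + A' + U')))
              + - alpha * (Ap / (Ap + A) * M - Ap / (Ap + A') * M') + - mu * (M - M') + 0 * 0)
        by ring end.
    eapply Rle_trans; [apply Rabs_comb4_le; eauto|].
    rewrite Rabs_R0, !Rabs_Ropp, !Rabs_right by nra. apply Hcoef; nra.
  - match goal with |- Rabs (?x - ?y) <= _ =>
      replace (x - y)
        with ((1 - r) * rho
                * (U * exp (- sigma * (M + A + U)) - U' * exp (- sigma * (M' + A' + U')))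
              + - (nu * gamma) * (M * (1 - Ap / (Ap + A)) - M' * (1 - Ap / (Ap + A')))
              + eta * (U - U') + - delta * (A - A'))
        by (rewrite !incidence_eq by lra; ring) end.
    eapply Rle_trans; [apply Rabs_comb4_le; eauto|].
    rewrite !Rabs_Ropp, !Rabs_right by nra. apply Hcoef; nra.
  - match goal with |- Rabs (?x - ?y) <= _ =>
      replace (x - y)
        with (nu * gamma * (M * (1 - Ap / (Ap + A)) - M' * (1 - Ap / (Ap + A')))
              + - eta * (U - U') + - delta * (U - U') + 0 * 0)
        by (rewrite !incidence_eq by lra; ring) end.
    eapply Rle_trans; [apply Rabs_comb4_le; eauto|].
    rewrite Rabs_R0, !Rabs_Ropp, !Rabs_right by nra. apply Hcoef; nra.
Qed.

Lemma main_field_inward M A U : 0 <= M -> 0 <= A -> 0 <= U ->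
  (M = 0 -> 0 <= c1 (main (M, A, U))) /\ (A = 0 -> 0 <= c2 (main (M, A, U))) /\
  (U = 0 -> 0 <= c3 (main (M, A, U))).
Proof.
  intros HM HA HU. destruct Hr.
  unfold main, main_field, c1, c2, c3; simpl.
  set (e := exp (- sigma * (M + A + U))). assert (0 < e) by apply exp_pos.
  assert (0 <= rho * U * e) by (apply Rmult_le_pos; [apply Rmult_le_pos|]; lra).
  split; [|split]; intros ->.
  - assert (0 <= r * rho * U * e) by (rewrite !Rmult_assoc in *; apply Rmult_le_pos; lra). lra.
  - assert (0 <= (1 - r) * rho * U * e)
      by (rewrite !Rmult_assoc in *; apply Rmult_le_pos; lra).
    nra.
  - assert (0 <= gamma * M / (Ap + A))
      by (apply Rmult_le_pos; [nra | left; apply Rinv_0_lt_compat; lra]).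
    assert (0 <= nu * (gamma * M / (Ap + A)) * A)
      by (apply Rmult_le_pos; [apply Rmult_le_pos|]; lra).
    lra.
Qed.

Lemma mul_exp_neg_le (s y : R) : 0 < s -> 0 <= y -> y * exp (- s * y) <= / s.
Proof.
  intros Hs Hy. pose proof (exp_ineq1_le (s * y)).
  assert (E : exp (- s * y) * exp (s * y) = 1)
    by (rewrite <- exp_plus; replace (- s * y + s * y) with 0 by ring; apply exp_0).
  pose proof (exp_pos (- s * y)). pose proof (exp_pos (s * y)).
  apply Rmult_le_reg_l with s; auto. rewrite Rinv_r by lra.
  assert (s * y * exp (- s * y) <= exp (s * y) * exp (- s * y)) by (apply Rmult_le_compat_r; lra).
  nra.
Qed.

(* Births are at most rho N exp (- sigma N) <= rho / sigma, losses at least min (mu, delta) N. *)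
Lemma main_field_total_nonpos M A U : 0 <= M -> 0 <= A -> 0 <= U ->
  rho / sigma <= Rmin mu delta * S -> S <= M + A + U ->
  c1 (main (M, A, U)) + c2 (main (M, A, U)) + c3 (main (M, A, U)) <= 0.
Proof.
  intros HM HA HU HSS Hsum.
  unfold main, main_field, c1, c2, c3; simpl. rewrite !incidence_eq by lra.
  set (N := M + A + U) in *.
  replace (r * rho * U * exp (- sigma * N) - alpha * (Ap / (Ap + A)) * M - mu * M +
           ((1 - r) * rho * U * exp (- sigma * N) - nu * gamma * M * (1 - Ap / (Ap + A))
            + eta * U - delta * A) +
           (nu * gamma * M * (1 - Ap / (Ap + A)) - eta * U - delta * U))
    with (rho * (U * exp (- sigma * N)) - alpha * (Ap / (Ap + A)) * M
          - (mu * M + delta * A + delta * U))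
    by ring.
  pose proof (mul_exp_neg_le sigma N Hsigma ltac:(unfold N; lra)).
  assert (U * exp (- sigma * N) <= N * exp (- sigma * N))
    by (apply Rmult_le_compat_r; [left; apply exp_pos | unfold N; lra]).
  assert (rho * (U * exp (- sigma * N)) <= rho / sigma)
    by (unfold Rdiv; apply Rmult_le_compat_l; lra).
  assert (0 <= alpha * (Ap / (Ap + A)) * M)
    by (apply Rmult_le_pos; [apply Rmult_le_pos; [lra | apply Rdiv_nonneg_pos; lra] | lra]).
  assert (Rmin mu delta * S <= Rmin mu delta * N)
    by (apply Rmult_le_compat_l; [apply Rmin_glb; lra | auto]).
  assert (Rmin mu delta * N <= mu * M + delta * A + delta * U)
    by (pose proof (Rmin_l mu delta); pose proof (Rmin_r mu delta); unfold N; nra).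
  lra.
Qed.

End MainField.

(** * Existence of solutions of the main system *)

Definition clip (S v : R) : R := Rmin (Rmax v 0) S.
Definition clip3 (S : R) (X : vec3) : vec3 := (clip S (c1 X), clip S (c2 X), clip S (c3 X)).

Lemma clip_range S v : 0 <= S -> 0 <= clip S v <= S.
Proof. intros. unfold clip, Rmin, Rmax. destruct (Rle_dec v 0); destruct (Rle_dec _ S); lra. Qed.

Lemma clip_id S v : 0 <= v <= S -> clip S v = v.
Proof. intros. unfold clip, Rmin, Rmax. destruct (Rle_dec v 0); destruct (Rle_dec _ S); lra. Qed.

Lemma clip_neg S v : 0 <= S -> v < 0 -> clip S v = 0.
Proof. intros. unfold clip, Rmin, Rmax. destruct (Rle_dec v 0); destruct (Rle_dec _ S); lra. Qed.

Lemma clip_lipschitz S v w : 0 <= S -> Rabs (clip S v - clip S w) <= Rabs (v - w).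
Proof.
  intros. unfold clip, Rmin, Rmax. apply Rabs_le.
  pose proof (Rle_abs (v - w)); pose proof (Rle_abs (- (v - w))); rewrite Rabs_Ropp in *.
  destruct (Rle_dec v 0); destruct (Rle_dec w 0); repeat destruct (Rle_dec _ S); lra.
Qed.

Lemma dist1_clip3 S a b : 0 <= S -> dist1 (clip3 S a) (clip3 S b) <= dist1 a b.
Proof.
  intros. unfold dist1, clip3; cbn [c1 c2 c3 fst snd].
  pose proof (clip_lipschitz S (c1 a) (c1 b) H); pose proof (clip_lipschitz S (c2 a) (c2 b) H).
  pose proof (clip_lipschitz S (c3 a) (c3 b) H). lra.
Qed.

Lemma clip3_sum_ge S X : 0 <= S -> nonneg3 X -> S <= c1 X + c2 X + c3 X ->
  S <= c1 (clip3 S X) + c2 (clip3 S X) + c3 (clip3 S X).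
Proof.
  intros HS [HM [HA HU]] Hsum. simpl in HM, HA, HU. unfold clip3; cbn [c1 c2 c3 fst snd].
  unfold clip, Rmin, Rmax. destruct (Rle_dec (c1 X) 0), (Rle_dec (c2 X) 0), (Rle_dec (c3 X) 0);
    repeat destruct (Rle_dec _ S); lra.
Qed.

Section Existence.
Variables (r rho sigma mu delta nu eta gamma alpha Ap S : R).
Hypotheses (Hr : 0 < r < 1) (Hrho : 0 < rho) (Hsigma : 0 < sigma) (Hmu : 0 < mu)
  (Hdelta : 0 < delta) (Hnu : 0 < nu) (Heta : 0 < eta) (Hgamma : 1 <= gamma)
  (Halpha : 0 <= alpha <= 1) (HAp : 0 < Ap) (HS : 0 <= S).

Let main := main_field r rho sigma mu delta nu eta gamma alpha Ap.
Let Lip := box_lipschitz_const rho sigma mu delta nu eta gamma alpha Ap S.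

(* Outside the box [0, S]^3 the field is replaced by its value at the nearest point of the box,
   which makes it globally Lipschitz and bounded. *)
Let clipped (X : vec3) : vec3 := main (clip3 S X).

Lemma clipped_lipschitz i a b :
  Rabs (comp i (clipped a) - comp i (clipped b)) <= (Lip + 1) * dist1 a b.
Proof.
  unfold clipped, clip3.
  eapply Rle_trans.
  { apply (main_field_lipschitz_on_box r rho sigma mu delta nu eta gamma alpha Ap S); auto;
      apply clip_range; auto. }
  pose proof (dist1_clip3 S a b HS). pose proof (dist1_ge0 (clip3 S a) (clip3 S b)).
  assert (0 <= Lip) by (eapply box_lipschitz_const_ge0; eauto).
  unfold clip3, Lip in *. nra.
Qed.

Lemma clipped_bounded i a : Rabs (comp i (clipped a)) <= Lip * (3 * S).
Proof.
  assert (H0 : comp i (main (0, 0, 0)) = 0)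
    by (unfold main, main_field; destruct i as [|[|]]; unfold comp, c1, c2, c3; simpl; field; lra).
  unfold clipped, clip3.
  replace (comp i (main (clip S (c1 a), clip S (c2 a), clip S (c3 a))))
    with (comp i (main (clip S (c1 a), clip S (c2 a), clip S (c3 a))) - comp i (main (0, 0, 0)))
    by lra.
  eapply Rle_trans.
  { apply (main_field_lipschitz_on_box r rho sigma mu delta nu eta gamma alpha Ap S); auto;
      try apply clip_range; auto; lra. }
  apply Rmult_le_compat_l; [eapply box_lipschitz_const_ge0; eauto|].
  unfold dist1; cbn [c1 c2 c3 fst snd]. rewrite !Rminus_0_r.
  pose proof (clip_range S (c1 a) HS); pose proof (clip_range S (c2 a) HS);
    pose proof (clip_range S (c3 a) HS).
  rewrite !Rabs_right by lra. lra.
Qed.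

Lemma clipped_quasi_positive : quasi_positive clipped.
Proof.
  exists 1. split; [lra|]. intros B _. exists 0. split; [lra|].
  intros X _ _ _ _; cbv zeta. rewrite !Rmult_0_l.
  unfold clipped, clip3.
  pose proof (clip_range S (c1 X) HS); pose proof (clip_range S (c2 X) HS);
    pose proof (clip_range S (c3 X) HS).
  destruct (main_field_inward r rho sigma mu delta nu eta gamma alpha Ap Hr Hrho Hnu Heta Hgamma HAp
              (clip S (c1 X)) (clip S (c2 X)) (clip S (c3 X))) as [I1 [I2 I3]]; try lra.
  split; [|split]; intros Hneg; apply Rle_ge;
    [apply I1 | apply I2 | apply I3]; apply clip_neg; auto.
Qed.

Lemma clipped_solution_in_box x : is_solution clipped x -> nonneg3 (x 0) ->
  c1 (x 0) + c2 (x 0) + c3 (x 0) <= S -> rho / sigma <= Rmin mu delta * S ->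
  forall t, 0 <= t -> nonneg3 (x t) /\ c1 (x t) + c2 (x t) + c3 (x t) <= S.
Proof.
  intros Hx HX0 HN HSS.
  assert (Hnn : forall t, 0 <= t -> nonneg3 (x t))
    by (apply (solution_nonneg clipped x clipped_quasi_positive Hx); auto).
  destruct (solution_continuous clipped x Hx) as [C1 [C2 C3]].
  destruct (solution_derive clipped x Hx) as [D1 [D2 D3]].
  intros t Ht. split; auto. rewrite <- (extend_past_eq x t Ht).
  apply (upper_bound_invariance
           (fun t => c1 (extend_past x t) + c2 (extend_past x t) + c3 (extend_past x t))
           (fun t => c1 (clipped (x t)) + c2 (clipped (x t)) + c3 (clipped (x t)))); auto.
  - intros s. apply continuity_pt_plus; [apply continuity_pt_plus|]; auto.
  - intros s Hs.
    apply (is_derive_plus (K := R_AbsRing) (V := R_NormedModule));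
      [apply (is_derive_plus (K := R_AbsRing) (V := R_NormedModule))|]; auto.
  - rewrite extend_past_eq by lra. auto.
  - intros s Hs Hgt. rewrite extend_past_eq in Hgt by lra.
    pose proof (clip3_sum_ge S (x s) HS (Hnn s ltac:(lra)) ltac:(lra)).
    pose proof (clip_range S (c1 (x s)) HS); pose proof (clip_range S (c2 (x s)) HS);
      pose proof (clip_range S (c3 (x s)) HS).
    unfold clipped, clip3 in *. cbn [c1 c2 c3 fst snd] in *.
    apply (main_field_total_nonpos r rho sigma mu delta nu eta gamma alpha Ap S
             Hrho Hsigma Hmu Hdelta Halpha HAp); auto; lra.
Qed.

Lemma main_solution_exists_in_box X0 : nonneg3 X0 -> c1 X0 + c2 X0 + c3 X0 <= S ->
  rho / sigma <= Rmin mu delta * S -> exists x, is_solution main x /\ x 0 = X0.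
Proof.
  intros HX0 HN HSS.
  assert (HLip : 0 <= Lip) by (eapply box_lipschitz_const_ge0; eauto).
  destruct (picard_lindelof clipped (Lip + 1) (Lip * (3 * S)) X0) as [x [Hx Hx0]];
    [lra | nra | apply clipped_lipschitz | apply clipped_bounded |].
  subst X0. exists x. split; auto.
  pose proof (clipped_solution_in_box x Hx HX0 HN HSS) as Hbox.
  destruct Hx as [Hd Hr0]. split; auto.
  intros t Ht. destruct (Hbox t ltac:(lra)) as [[P1 [P2 P3]] Hsum].
  assert (E : clipped (x t) = main (x t)).
  { unfold clipped, clip3. destruct (x t) as [[M A] U]. cbn [c1 c2 c3 fst snd E0] in *.
    rewrite !clip_id by lra. reflexivity. }
  rewrite <- E. apply Hd; auto.
Qed.

End Existence.

Lemma main_solution_exists r rho sigma mu delta nu eta gamma alpha Ap :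
  0 < r < 1 -> 0 < rho -> 0 < sigma -> 0 < mu -> 0 < delta -> 0 < nu -> 0 < eta -> 1 <= gamma ->
  0 <= alpha <= 1 -> 0 < Ap -> forall X0, nonneg3 X0 ->
  exists x, is_solution (main_field r rho sigma mu delta nu eta gamma alpha Ap) x /\ x 0 = X0.
Proof.
  intros Hr Hrho Hsigma Hmu Hdelta Hnu Heta Hgamma Halpha HAp X0 HX0.
  set (m := Rmin mu delta). assert (Hm : 0 < m) by (apply Rmin_glb_lt; lra).
  set (S := Rmax (c1 X0 + c2 X0 + c3 X0) (rho / sigma / m)).
  assert (HS0 : 0 <= S).
  { eapply Rle_trans; [|apply Rmax_r]. apply Rdiv_nonneg_pos; [apply Rdiv_nonneg_pos|]; lra. }
  apply (main_solution_exists_in_box r rho sigma mu delta nu eta gamma alpha Ap S); auto.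
  - apply Rmax_l.
  - fold m. assert (rho / sigma / m <= S) by apply Rmax_r.
    replace (rho / sigma) with (m * (rho / sigma / m)) by (field; lra).
    apply Rmult_le_compat_l; lra.
Qed.

Lemma lower_of_two_ordered_unique (P : vec3 -> Prop) (E1 E2 F1 F2 : vec3) :
  lt3 E1 E2 -> lt3 F1 F2 -> P E1 -> P F1 ->
  (forall E, P E -> E = E1 \/ E = E2) -> (forall E, P E -> E = F1 \/ E = F2) -> E1 = F1.
Proof.
  intros [HE _] [HF _] PE1 PF1 HunE HunF.
  destruct (HunF E1 PE1) as [|HE1]; auto. subst E1.
  destruct (HunE F1 PF1) as [HF1|HF1]; rewrite HF1 in *; lra.
Qed.

Theorem theorem2
  (r rho sigma mu delta nu eta gamma alpha Apcrit : R)
  (Hr : 0 < r < 1) (Hrho : 0 < rho) (Hsigma : 0 < sigma) (Hmu : 0 < mu)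
  (Hdelta : 0 < delta) (Hnu : 0 < nu) (Heta : 0 < eta) (Hgamma : 1 <= gamma)
  (Halpha : 0 <= alpha <= 1)
  (HNM : N_M r rho mu delta nu eta gamma > 1)
  (* defining properties of the threshold \tilde A_p^{crit} (auxiliary system) *)
  (Hcrit_pos : 0 < Apcrit)
  (Hcrit_above : forall Ap, Apcrit < Ap ->
     (forall E, pos3 E ->
        ~ is_equilibrium (aux_field r rho sigma mu delta nu eta gamma alpha Ap) E) /\
     GAS_on_nonneg (aux_field r rho sigma mu delta nu eta gamma alpha Ap) E0)
  (Hcrit_below : forall Ap, 0 < Ap < Apcrit ->
     exists E1 E2,
       pos3 E1 /\ pos3 E2 /\ lt3 E1 E2 /\
       is_equilibrium (aux_field r rho sigma mu delta nu eta gamma alpha Ap) E1 /\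
       is_equilibrium (aux_field r rho sigma mu delta nu eta gamma alpha Ap) E2 /\
       (forall E, pos3 E ->
          is_equilibrium (aux_field r rho sigma mu delta nu eta gamma alpha Ap) E ->
          E = E1 \/ E = E2) /\
       (forall X, nonneg3 X -> lt3 X E1 ->
          in_basin (aux_field r rho sigma mu delta nu eta gamma alpha Ap) E0 X))
  (Ap : R) (HAp : 0 < Ap) :
  (Ap < Apcrit ->
     forall E1 E2 : vec3,
       pos3 E1 -> pos3 E2 -> lt3 E1 E2 ->
       is_equilibrium (aux_field r rho sigma mu delta nu eta gamma alpha Ap) E1 ->
       is_equilibrium (aux_field r rho sigma mu delta nu eta gamma alpha Ap) E2 ->
       (forall E, pos3 E ->
          is_equilibrium (aux_field r rho sigma mu delta nu eta gamma alpha Ap) E ->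
          E = E1 \/ E = E2) ->
       forall X, nonneg3 X -> lt3 X E1 ->
         in_basin (main_field r rho sigma mu delta nu eta gamma alpha Ap) E0 X) /\
  (Apcrit < Ap ->
     GAS_on_nonneg (main_field r rho sigma mu delta nu eta gamma alpha Ap) E0).
Proof.
  pose proof (main_dominated_by_aux r rho sigma mu delta nu eta gamma alpha Ap
                Hr Hrho Hsigma Hmu Hdelta Hnu Heta Hgamma Halpha HAp) as Hdom.
  pose proof (main_solution_exists r rho sigma mu delta nu eta gamma alpha Ap
                Hr Hrho Hsigma Hmu Hdelta Hnu Heta Hgamma Halpha HAp) as Hex.
  split.
  - intros HApc E1 E2 P1 P2 L12 Eq1 Eq2 Huniq X HX LX.
    destruct (Hcrit_below Ap (conj HAp HApc))
      as [F1 [F2 [Q1 [Q2 [LF [EqF1 [EqF2 [HuniqF Hbasin]]]]]]]].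
    assert (HEF : E1 = F1)
      by (apply (lower_of_two_ordered_unique
                   (fun E => pos3 E /\
                      is_equilibrium (aux_field r rho sigma mu delta nu eta gamma alpha Ap) E)
                   E1 E2 F1 F2); auto; intros E [PE EqE]; auto).
    subst F1. apply (in_basin_of_dominated _ _ X Hdom); auto.
  - intros HApc. destruct (Hcrit_above Ap HApc) as [_ [Hstable Hbasin]]. split.
    + apply (stable_of_dominated _ _ Hdom); auto.
      intros X0 HX0. apply (Hbasin X0 HX0).
    + intros X0 HX0. apply (in_basin_of_dominated _ _ X0 Hdom); auto.
Qed.
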